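(* For every set $\mathcal X$ of $n$ entities, each moving along a trajectory of $\tau$ edges (in general position), and every $\varepsilon\ge 0$, the Reeb graph $\mathcal R=(V,E)$ has $O(\tau n^2)$ vertices and $O(\tau n^2)$ edges. These bounds are tight in the worst case: there are inputs for which $\mathcal R$ has $\Omega(\tau n^2)$ vertices and edges.
   Context: Let $\mathcal X$ be a set of $n$ entities. All trajectories are sampled at common times $t_0<t_1<\dots<t_\tau$; each entity $x$ has a position $x(t_i)\in\mathbb R^2$ at each $t_i$ and moves with constant velocity between consecutive sample times, so its trajectory is a polygonal path with $\tau$ edges defined on $[t_0,t_\tau]$. Fix $\varepsilon\ge 0$. Two entities $x,y$ are directly connected at time $t$ if their closed discs of radius $\varepsilon$ centred at $x(t)$ and $y(t)$ intersect, i.e. $\|x(t)-y(t)\|\le 2\varepsilon$. They are $\varepsilon$-connected at time $t$ if there is a sequence $x=x_0,\dots,x_k=y$ of entities with $x_i,x_{i+1}$ directly connected at $t$ for all $i$. A component at time $t$ is a maximal set of pairwise $\varepsilon$-connected entities; the components at time $t$ partition $\mathcal X$. General position: no two distinct events at which a pair of entities becomes directly connected or directly disconnected occur at the same time. The Reeb graph $\mathcal R$ is the directed graph describing the evolution of the components over $[t_0,t_\tau]$: it has a start vertex for each component at $t_0$ (in-degree 0, out-degree 1), an end vertex for each component at $t_\tau$ (in-degree 1, out-degree 0), a merge vertex (in-degree 2, out-degree 1) at each time two components unite into one, and a split vertex (in-degree 1, out-degree 2) at each time a component splits into two; each vertex $v$ has a time $t_v$, and each edge $e=(u,v)$ with $t_u<t_v$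 corresponds to a set $C_e$ of entities that is a component at every time in $[t_u,t_v]$. *)

From Stdlib Require Import Reals Lra Lia List Relations.
Open Scope R_scope.

(* Input: n entities (indexed 0..n-1), tau edges per trajectory,        *)
(* sample times ts 0 < ts 1 < ... < ts tau, positions pts i x = x(t_i), *)

Section Trajectories.

Variables (n tau : nat) (ts : nat -> R) (pts : nat -> nat -> R * R) (eps : R).

Definition times_increasing : Prop :=
  forall i, (i < tau)%nat -> ts i < ts (S i).

(* position of entity x at time t, computed on the edge [ts i, ts (S i)]
   (constant velocity = linear interpolation) *)
Definition interp (i x : nat) (t : R) : R * R :=
  let p := pts i x in
  let q := pts (S i) x in
  let l := (t - ts i) / (ts (S i) - ts i) in
  (fst p + l * (fst q - fst p), snd p + l * (snd q - snd p)).

(* the closed eps-discs centred at x(t) and y(t) intersect,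
   i.e. ||x(t) - y(t)|| <= 2 eps (squared form; eps >= 0 is assumed) *)
Definition dconn (t : R) (x y : nat) : Prop :=
  exists i, (i < tau)%nat /\ ts i <= t <= ts (S i) /\
    let p := interp i x t in
    let q := interp i y t in
    (fst p - fst q) ^ 2 + (snd p - snd q) ^ 2 <= (2 * eps) ^ 2.

Definition conn (t : R) : relation nat :=
  clos_refl_trans nat (fun a b => (a < n)%nat /\ (b < n)%nat /\ dconn t a b).

Definition IsComp (t : R) (C : nat -> Prop) : Prop :=
  exists x, (x < n)%nat /\ forall y, C y <-> ((y < n)%nat /\ conn t x y).

Definition in_domain (t : R) : Prop := ts 0 <= t <= ts tau.

Definition becomes_connected (x y : nat) (t : R) : Prop :=
  in_domain t /\ dconn t x y /\
  forall d, 0 < d -> exists s, in_domain s /\ t - d < s < t /\ ~ dconn s x y.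

Definition becomes_disconnected (x y : nat) (t : R) : Prop :=
  in_domain t /\ dconn t x y /\
  forall d, 0 < d -> exists s, in_domain s /\ t < s < t + d /\ ~ dconn s x y.

Definition event (x y : nat) (b : bool) (t : R) : Prop :=
  (x < y)%nat /\ (y < n)%nat /\
  (if b then becomes_connected x y t else becomes_disconnected x y t).

Definition general_position : Prop :=
  (forall x y b t x' y' b' t',
      event x y b t -> event x' y' b' t' ->
      (x, y, b) <> (x', y', b') -> t <> t') /\
  (forall x y b t, event x y b t -> ts 0 < t < ts tau).

Inductive VKind := VStart | VEnd | VMerge | VSplit.

Record ReebGraph := {
  nv : nat;
  ne : nat;
  src : nat -> nat;
  dst : nat -> nat;
  vtime : nat -> R;
  vkind : nat -> VKind;
  ecomp : nat -> nat -> Prop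
}.

Definition outdeg (G : ReebGraph) (v : nat) : nat :=
  length (filter (fun e => Nat.eqb (src G e) v) (seq 0 (ne G))).
Definition indeg (G : ReebGraph) (v : nat) : nat :=
  length (filter (fun e => Nat.eqb (dst G e) v) (seq 0 (ne G))).

Definition sameset (A B : nat -> Prop) : Prop := forall y, A y <-> B y.

Definition IsReebGraph (G : ReebGraph) : Prop :=
  (forall e, (e < ne G)%nat ->
     (src G e < nv G)%nat /\ (dst G e < nv G)%nat /\
     vtime G (src G e) < vtime G (dst G e) /\
     forall t, vtime G (src G e) < t < vtime G (dst G e) ->
               IsComp t (ecomp G e)) /\
  (forall v, (v < nv G)%nat ->
     match vkind G v with
     | VStart =>
         indeg G v = 0%nat /\ outdeg G v = 1%nat /\ vtime G v = ts 0 /\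
         forall e, (e < ne G)%nat -> src G e = v -> IsComp (ts 0) (ecomp G e)
     | VEnd =>
         indeg G v = 1%nat /\ outdeg G v = 0%nat /\ vtime G v = ts tau /\
         forall e, (e < ne G)%nat -> dst G e = v -> IsComp (ts tau) (ecomp G e)
     | VMerge =>
         indeg G v = 2%nat /\ outdeg G v = 1%nat /\
         forall e1 e2 e3, (e1 < ne G)%nat -> (e2 < ne G)%nat -> (e3 < ne G)%nat ->
           e1 <> e2 -> dst G e1 = v -> dst G e2 = v -> src G e3 = v ->
           (forall y, ~ (ecomp G e1 y /\ ecomp G e2 y)) /\
           sameset (ecomp G e3) (fun y => ecomp G e1 y \/ ecomp G e2 y)
     | VSplit =>
         indeg G v = 1%nat /\ outdeg G v = 2%nat /\
         forall e1 e2 e3, (e1 < ne G)%nat -> (e2 < ne G)%nat -> (e3 < ne G)%nat ->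
           e1 <> e2 -> src G e1 = v -> src G e2 = v -> dst G e3 = v ->
           (forall y, ~ (ecomp G e1 y /\ ecomp G e2 y)) /\
           sameset (ecomp G e3) (fun y => ecomp G e1 y \/ ecomp G e2 y)
     end) /\
  (forall t C, in_domain t -> IsComp t C ->
     exists e, (e < ne G)%nat /\
       vtime G (src G e) <= t <= vtime G (dst G e) /\ sameset (ecomp G e) C) /\
  (forall e e' t, (e < ne G)%nat -> (e' < ne G)%nat -> e <> e' ->
     vtime G (src G e) < t < vtime G (dst G e) ->
     vtime G (src G e') < t < vtime G (dst G e') ->
     ~ sameset (ecomp G e) (ecomp G e')).

End Trajectories.

(** The components only change when a pair of entities
    becomes directly connected or disconnected.  Along one trajectory edge
    the squared distance of two entities is a convex quadratic in time, so
    each pair becomes connected at most once and disconnected at most once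
    per trajectory edge.  A merge (split) vertex of a Reeb graph at time [t]
    forces such an event at [t] between two entities of the component it
    creates (destroys), and together with the trajectory edge containing
    [t] this event identifies the vertex; start and end vertices are
    identified by any of their entities.  Hence there are at most
    [4 tau n^2] vertices, and, in-degrees being at most 2, at most
    [8 tau n^2] edges.

    Lower bound.  [h] posts rest on a line while [w] runners sweep back and
    forth along it, one sweep per trajectory edge; every runner passes every
    post once per sweep, at pairwise distinct integer times.  With
    [eps = 1/8] the components are singletons except for the one passing
    pair, so every Reeb graph needs a separate edge for each of the
    [tau h w >= tau n^2 / 8] pair components, and an explicit Reeb graph
    exists. *)

From Stdlib Require Import Reals Lra Lia List Relations Arith ClassicalEpsilon Bool Permutation.
Import ListNotations.

Open Scope nat_scope.

(** * Arithmetic on mixed-radix codes *)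

Lemma divmod_mul_add a b d : b < d -> (a * d + b) / d = a /\ (a * d + b) mod d = b.
Proof.
  intros Hb. split.
  - symmetry. apply Nat.div_unique with b; lia.
  - symmetry. apply Nat.mod_unique with a; lia.
Qed.

Lemma mul_add_inj x x' d i i' :
  i < d -> i' < d -> x * d + i = x' * d + i' -> x = x' /\ i = i'.
Proof.
  intros Hi Hi' E.
  destruct (divmod_mul_add x i d Hi) as [Q R].
  destruct (divmod_mul_add x' i' d Hi') as [Q' R']. rewrite E in Q, R. lia.
Qed.

Lemma succ_block r d : d <> 0 ->
  (r mod d + 1 < d /\ (r + 1) / d = r / d /\ (r + 1) mod d = r mod d + 1) \/
  (r mod d = d - 1 /\ (r + 1) / d = r / d + 1 /\ (r + 1) mod d = 0).
Proof.
  intros Hd. pose proof (Nat.div_mod_eq r d). pose proof (Nat.mod_upper_bound r d Hd).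
  destruct (Nat.lt_ge_cases (r mod d + 1) d) as [Hs|Hs].
  - left. split; auto. replace (r + 1) with (r / d * d + (r mod d + 1)) by lia.
    apply divmod_mul_add; auto.
  - right. split; [lia|]. replace (r + 1) with ((r / d + 1) * d + 0) by nia.
    apply divmod_mul_add; lia.
Qed.

(** * A zig-zag schedule

    Time is cut into blocks of length [P].  In block [i] a family of [d]
    events happens at the offsets [g 0 < g 1 < ... < g (d-1)] inside
    [(0, P)] when [i] is even, and at the mirrored offsets [P - g q] when [i]
    is odd.  Listing the events of block [i] in chronological order
    ([zigzag]) gives a strictly increasing global schedule. *)

(* Position in block [i] of the [q]-th event in chronological order. *)
Definition zigzag (d i q : nat) : nat := if Nat.even i then q else d - 1 - q.

Lemma zigzag_lt d i q : q < d -> zigzag d i q < d.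
Proof. intros. unfold zigzag. destruct (Nat.even i); lia. Qed.

Lemma zigzag_invol d i q : q < d -> zigzag d i (zigzag d i q) = q.
Proof. intros. unfold zigzag. destruct (Nat.even i); lia. Qed.

Definition block_time (P : nat) (g : nat -> nat) (i q : nat) : nat :=
  i * P + (if Nat.even i then g q else P - g q).

Definition schedule (P d : nat) (g : nat -> nat) (r : nat) : nat :=
  block_time P g (r / d) (zigzag d (r / d) (r mod d)).

Section ZigZag.
Variables (P d : nat) (g : nat -> nat).
Hypothesis Hd : d <> 0.
Hypothesis g_range : forall q, q < d -> 1 <= g q < P.
Hypothesis g_incr : forall q, q + 1 < d -> g q < g (q + 1).

Lemma block_time_range i q : q < d -> i * P + 1 <= block_time P g i q < i * P + P.
Proof.
  intros Hq. pose proof (g_range q Hq). unfold block_time. destruct (Nat.even i); lia.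
Qed.

Lemma schedule_step r : schedule P d g r < schedule P d g (r + 1).
Proof.
  pose proof (Nat.mod_upper_bound r d Hd) as Hq.
  unfold schedule. destruct (succ_block r d Hd) as [[Hin [-> ->]]|[Hlast [-> ->]]].
  - set (q := r mod d) in *. unfold block_time, zigzag.
    destruct (Nat.even (r / d)).
    + pose proof (g_incr q Hin). lia.
    + replace (d - 1 - q) with ((d - 1 - (q + 1)) + 1) by lia.
      pose proof (g_incr (d - 1 - (q + 1)) ltac:(lia)).
      pose proof (g_range (d - 1 - (q + 1) + 1) ltac:(lia)). lia.
  - pose proof (block_time_range (r / d) _ (zigzag_lt d (r / d) _ Hq)).
    pose proof (block_time_range (r / d + 1) _ (zigzag_lt d (r / d + 1) 0 ltac:(lia))). nia.
Qed.

Lemma schedule_mono r r' : r < r' -> schedule P d g r < schedule P d g r'.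
Proof.
  intros Hr. induction r' as [|r' IH]; [lia|].
  replace (S r') with (r' + 1) by lia. pose proof (schedule_step r').
  destruct (Nat.eq_dec r r') as [<-|]; [lia|]. pose proof (IH ltac:(lia)). lia.
Qed.

End ZigZag.

(** * The meetings of the lower-bound construction

    The worst-case input has [h] stationary "posts" (entities [0 .. h-1])
    and [w] "runners" (entities [h .. h+w-1]) that sweep back and forth past
    all posts during every trajectory edge.  Runner [k] meets post [j] during
    edge [i] exactly once; the meeting is coded by the number
    [m = (i * h + j) * w + k < tau * h * w] and happens at the integer time
    [meet_time m]. *)

Section Meetings.
Variables (h w tau : nat).
Hypothesis Hh : 1 <= h.
Hypothesis Hw : 1 <= w.

Definition period := h * w + 1.
Definition nmeet := tau * h * w.

Definition meet_code i j k := (i * h + j) * w + k.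
Definition meet_runner m := m mod w.
Definition meet_post m := (m / w) mod h.
Definition meet_edge m := m / w / h.

(* During an even edge runner [k] reaches post [j] [offset j k] time units
   after the start of the edge; during an odd edge it runs backwards. *)
Definition offset j k := j + k * h + 1.
Definition meet_time_at i j k := block_time period (fun k' => offset j k') i k.
Definition meet_time m := meet_time_at (meet_edge m) (meet_post m) (meet_runner m).

Lemma meet_runner_lt m : meet_runner m < w.
Proof. apply Nat.mod_upper_bound. lia. Qed.

Lemma meet_post_lt m : meet_post m < h.
Proof. apply Nat.mod_upper_bound. lia. Qed.

Lemma meet_edge_lt m : m < nmeet -> meet_edge m < tau.
Proof.
  intros Hm. unfold meet_edge, nmeet in *.
  apply Nat.Div0.div_lt_upper_bound, Nat.Div0.div_lt_upper_bound. nia.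
Qed.

Lemma meet_decode i j k : j < h -> k < w ->
  meet_edge (meet_code i j k) = i /\ meet_post (meet_code i j k) = j /\
  meet_runner (meet_code i j k) = k.
Proof.
  intros Hj Hk. unfold meet_edge, meet_post, meet_runner, meet_code.
  destruct (divmod_mul_add (i * h + j) k w Hk) as [-> ->].
  destruct (divmod_mul_add i j h Hj) as [-> ->]. auto.
Qed.

Lemma meet_encode m : meet_code (meet_edge m) (meet_post m) (meet_runner m) = m.
Proof.
  unfold meet_code, meet_edge, meet_post, meet_runner.
  pose proof (Nat.div_mod_eq m w). pose proof (Nat.div_mod_eq (m / w) h). lia.
Qed.

Lemma meet_code_lt i j k : i < tau -> j < h -> k < w -> meet_code i j k < nmeet.
Proof.
  intros. unfold meet_code, nmeet.
  assert (i * h + j + 1 <= tau * h) by nia. assert ((i * h + j + 1) * w <= tau * h * w) by nia.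
  nia.
Qed.

Lemma meet_time_code i j k : j < h -> k < w -> meet_time (meet_code i j k) = meet_time_at i j k.
Proof. intros. unfold meet_time. destruct (meet_decode i j k) as [-> [-> ->]]; auto. Qed.

Lemma offset_range j k : j < h -> k < w -> 1 <= offset j k < period.
Proof. intros. unfold offset, period. nia. Qed.

Lemma meet_time_at_range i j k : j < h -> k < w ->
  i * period + 1 <= meet_time_at i j k < i * period + period.
Proof.
  intros Hj Hk. apply (block_time_range period w (offset j)); auto; [lia|].
  intros q Hq. apply offset_range; auto.
Qed.

Lemma meet_time_range m : m < nmeet -> 1 <= meet_time m /\ meet_time m + 1 <= tau * period.
Proof.
  intros Hm. pose proof (meet_edge_lt m Hm).
  pose proof (meet_time_at_range (meet_edge m) _ _ (meet_post_lt m) (meet_runner_lt m)).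
  unfold meet_time. nia.
Qed.

Lemma meet_time_inj m m' : meet_time m = meet_time m' -> m = m'.
Proof.
  intros E. rewrite <- (meet_encode m), <- (meet_encode m').
  pose proof (meet_post_lt m) as Hj. pose proof (meet_post_lt m') as Hj'.
  pose proof (meet_runner_lt m) as Hk. pose proof (meet_runner_lt m') as Hk'.
  pose proof (offset_range _ _ Hj Hk) as Ho. pose proof (offset_range _ _ Hj' Hk') as Ho'.
  unfold meet_time, meet_time_at, block_time in E.
  set (i := meet_edge m) in *. set (i' := meet_edge m') in *.
  assert (Inner : forall i0 j0 k0, 1 <= offset j0 k0 < period ->
    (if Nat.even i0 then offset j0 k0 else period - offset j0 k0) < period).
  { intros i0 j0 k0 Hr. destruct (Nat.even i0); lia. }
  destruct (mul_add_inj i i' period _ _ (Inner i _ _ Ho) (Inner i' _ _ Ho') E)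
    as [<- Eo].
  assert (Eoff : offset (meet_post m) (meet_runner m) = offset (meet_post m') (meet_runner m'))
    by (destruct (Nat.even i); lia).
  unfold offset in Eoff.
  destruct (mul_add_inj (meet_runner m) (meet_runner m') h _ _ Hj Hj' ltac:(lia)) as [-> ->].
  reflexivity.
Qed.

(* The [r]-th meeting of post [j] (runners in zig-zag order, [r < tau * w])
   and the rank of a meeting among the meetings of its post. *)
Definition post_meeting j r := meet_code (r / w) j (zigzag w (r / w) (r mod w)).
Definition post_rank m := meet_edge m * w + zigzag w (meet_edge m) (meet_runner m).

(* The same for runner [k], which meets the posts in zig-zag order. *)
Definition runner_meeting k r := meet_code (r / h) (zigzag h (r / h) (r mod h)) k.
Definition runner_rank m := meet_edge m * h + zigzag h (meet_edge m) (meet_post m).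

Lemma post_meeting_spec j r : j < h -> r < tau * w ->
  post_meeting j r < nmeet /\ meet_post (post_meeting j r) = j.
Proof.
  intros Hj Hr. pose proof (Nat.mod_upper_bound r w ltac:(lia)).
  assert (r / w < tau) by (apply Nat.Div0.div_lt_upper_bound; nia).
  unfold post_meeting. split.
  - apply meet_code_lt; auto. apply zigzag_lt; auto.
  - apply meet_decode; auto. apply zigzag_lt; auto.
Qed.

Lemma runner_meeting_spec k r : k < w -> r < tau * h ->
  runner_meeting k r < nmeet /\ meet_runner (runner_meeting k r) = k.
Proof.
  intros Hk Hr. pose proof (Nat.mod_upper_bound r h ltac:(lia)).
  assert (r / h < tau) by (apply Nat.Div0.div_lt_upper_bound; nia).
  unfold runner_meeting. split.
  - apply meet_code_lt; auto. apply zigzag_lt; auto.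
  - apply meet_decode; auto. apply zigzag_lt; auto.
Qed.

Lemma post_rank_spec m : m < nmeet ->
  post_rank m < tau * w /\ post_meeting (meet_post m) (post_rank m) = m.
Proof.
  intros Hm. pose proof (meet_edge_lt m Hm). pose proof (meet_runner_lt m) as Hk.
  pose proof (zigzag_lt w (meet_edge m) _ Hk) as Hz.
  split; [unfold post_rank; nia|].
  unfold post_meeting, post_rank.
  destruct (divmod_mul_add (meet_edge m) _ w Hz) as [-> ->].
  rewrite zigzag_invol by auto. apply meet_encode.
Qed.

Lemma runner_rank_spec m : m < nmeet ->
  runner_rank m < tau * h /\ runner_meeting (meet_runner m) (runner_rank m) = m.
Proof.
  intros Hm. pose proof (meet_edge_lt m Hm). pose proof (meet_post_lt m) as Hj.
  pose proof (zigzag_lt h (meet_edge m) _ Hj) as Hz.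
  split; [unfold runner_rank; nia|].
  unfold runner_meeting, runner_rank.
  destruct (divmod_mul_add (meet_edge m) _ h Hz) as [-> ->].
  rewrite zigzag_invol by auto. apply meet_encode.
Qed.

Lemma post_rank_meeting j r : j < h -> post_rank (post_meeting j r) = r.
Proof.
  intros Hj. pose proof (Nat.mod_upper_bound r w ltac:(lia)) as Hq.
  unfold post_rank, post_meeting.
  destruct (meet_decode (r / w) j _ Hj (zigzag_lt w (r / w) _ Hq)) as [-> [_ ->]].
  rewrite zigzag_invol by auto. pose proof (Nat.div_mod_eq r w). lia.
Qed.

Lemma runner_rank_meeting k r : k < w -> runner_rank (runner_meeting k r) = r.
Proof.
  intros Hk. pose proof (Nat.mod_upper_bound r h ltac:(lia)) as Hq.
  unfold runner_rank, runner_meeting.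
  destruct (meet_decode (r / h) _ k (zigzag_lt h (r / h) _ Hq) Hk) as [-> [-> _]].
  rewrite zigzag_invol by auto. pose proof (Nat.div_mod_eq r h). lia.
Qed.

Lemma post_meeting_mono j r r' : j < h -> r < r' ->
  meet_time (post_meeting j r) < meet_time (post_meeting j r').
Proof.
  intros Hj Hr.
  assert (E : forall r0, meet_time (post_meeting j r0) = schedule period w (offset j) r0).
  { intros r0. unfold post_meeting. rewrite meet_time_code; auto.
    apply zigzag_lt, Nat.mod_upper_bound. lia. }
  rewrite !E. apply schedule_mono; auto; [lia| |].
  - intros q Hq. apply offset_range; auto.
  - intros q Hq. unfold offset. lia.
Qed.

Lemma runner_meeting_mono k r r' : k < w -> r < r' ->
  meet_time (runner_meeting k r) < meet_time (runner_meeting k r').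
Proof.
  intros Hk Hr.
  assert (E : forall r0, meet_time (runner_meeting k r0) =
                         schedule period h (fun j => offset j k) r0).
  { intros r0. unfold runner_meeting. rewrite meet_time_code; auto.
    apply zigzag_lt, Nat.mod_upper_bound. lia. }
  rewrite !E. apply schedule_mono; auto; [lia| |].
  - intros q Hq. apply offset_range; auto.
  - intros q Hq. unfold offset. lia.
Qed.

Definition involved m x := x = meet_post m \/ x = h + meet_runner m.

Definition nmeets x := if x <? h then tau * w else tau * h.
Definition meeting x r := if x <? h then post_meeting x r else runner_meeting (x - h) r.
Definition rank x m := if x <? h then post_rank m else runner_rank m.

Lemma involved_lt m x : involved m x -> x < h + w.
Proof. pose proof (meet_post_lt m). pose proof (meet_runner_lt m). unfold involved. lia. Qed.

Lemma involved_distinct m : meet_post m <> h + meet_runner m.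
Proof. pose proof (meet_post_lt m). lia. Qed.

Lemma meeting_spec x r : x < h + w -> r < nmeets x ->
  meeting x r < nmeet /\ involved (meeting x r) x.
Proof.
  intros Hx Hr. unfold nmeets, meeting, involved in *. destruct (x <? h) eqn:E.
  - apply Nat.ltb_lt in E. destruct (post_meeting_spec x r E Hr). auto.
  - apply Nat.ltb_ge in E. destruct (runner_meeting_spec (x - h) r ltac:(lia) Hr). split; auto; lia.
Qed.

Lemma rank_spec m x : m < nmeet -> involved m x ->
  rank x m < nmeets x /\ meeting x (rank x m) = m.
Proof.
  intros Hm Hi. pose proof (meet_post_lt m).
  unfold nmeets, meeting, rank, involved in *. destruct (x <? h) eqn:E.
  - apply Nat.ltb_lt in E. replace x with (meet_post m) by lia. apply post_rank_spec; auto.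
  - apply Nat.ltb_ge in E. replace (x - h) with (meet_runner m) by lia. apply runner_rank_spec; auto.
Qed.

Lemma rank_meeting x r : x < h + w -> rank x (meeting x r) = r.
Proof.
  intros Hx. unfold meeting, rank. destruct (x <? h) eqn:E.
  - apply post_rank_meeting. apply Nat.ltb_lt; auto.
  - apply runner_rank_meeting. apply Nat.ltb_ge in E. lia.
Qed.

Lemma meeting_mono x r r' : x < h + w -> r < r' ->
  meet_time (meeting x r) < meet_time (meeting x r').
Proof.
  intros Hx Hr. unfold meeting. destruct (x <? h) eqn:E.
  - apply post_meeting_mono; auto. apply Nat.ltb_lt; auto.
  - apply runner_meeting_mono; auto. apply Nat.ltb_ge in E. lia.
Qed.

Lemma meeting_mono_le x r r' : x < h + w -> r <= r' ->
  meet_time (meeting x r) <= meet_time (meeting x r').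
Proof.
  intros Hx Hr. destruct (Nat.eq_dec r r') as [->|]; [lia|].
  apply Nat.lt_le_incl, meeting_mono; auto; lia.
Qed.

End Meetings.

Open Scope R_scope.

(** * Two elementary facts about the squared distance of two linear motions

    During one trajectory edge, two entities move linearly, so their squared
    distance is a quadratic [quad A B C D u] in the elapsed time [u] with a
    nonnegative leading coefficient [B^2 + D^2]. *)

Definition quad (A B C D u : R) := (A + u * B) ^ 2 + (C + u * D) ^ 2.

Lemma quad_sublevel_interval A B C D u1 u u2 c : u1 <= u <= u2 ->
  quad A B C D u1 <= c -> quad A B C D u2 <= c -> quad A B C D u <= c.
Proof.
  intros [H1 H2] Q1 Q2.
  destruct (Req_dec u1 u2) as [E|E]; [replace u with u1 by lra; auto|].
  assert (Hid : (u2 - u1) * quad A B C D u =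
     (u2 - u) * quad A B C D u1 + (u - u1) * quad A B C D u2
     - (u - u1) * (u2 - u) * (u2 - u1) * (B ^ 2 + D ^ 2)) by (unfold quad; ring).
  assert (0 <= (u - u1) * (u2 - u) * (u2 - u1) * (B ^ 2 + D ^ 2)).
  { apply Rmult_le_pos; [|nra]. apply Rmult_le_pos; [|lra]. apply Rmult_le_pos; lra. }
  assert ((u2 - u) * quad A B C D u1 <= (u2 - u) * c) by (apply Rmult_le_compat_l; lra).
  assert ((u - u1) * quad A B C D u2 <= (u - u1) * c) by (apply Rmult_le_compat_l; lra).
  apply (Rmult_le_reg_l (u2 - u1)); lra.
Qed.

Lemma quad_gt_locally A B C D u0 c : quad A B C D u0 > c ->
  exists d, 0 < d /\ forall u, Rabs (u - u0) < d -> quad A B C D u > c.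
Proof.
  intros Hc.
  assert (Hcont : continuity_pt (quad A B C D) u0) by (unfold quad; reg).
  destruct (Hcont (quad A B C D u0 - c)) as [d [Hd Hclose]]; [lra|].
  exists d. split; auto. intros u Hu.
  destruct (Req_dec u u0) as [->|Hne]; auto.
  assert (Hdist : R_dist (quad A B C D u) (quad A B C D u0) < quad A B C D u0 - c)
    by (apply Hclose; split; [split; [exact I|auto]|exact Hu]).
  unfold R_dist in Hdist. apply Rabs_def2 in Hdist. lra.
Qed.

Lemma common_radius (W : nat -> R -> Prop) k :
  (forall a d d', 0 < d' <= d -> W a d -> W a d') ->
  (forall a, (a < k)%nat -> exists d, 0 < d /\ W a d) ->
  exists d, 0 < d /\ forall a, (a < k)%nat -> W a d.
Proof.
  intros Hmon. induction k as [|k IH]; intros H.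
  - exists 1; split; [lra|]. intros; lia.
  - destruct IH as [d1 [Hd1 H1]]. { intros a Ha; apply H; lia. }
    destruct (H k (Nat.lt_succ_diag_r k)) as [d2 [Hd2 H2]].
    exists (Rmin d1 d2). split; [apply Rmin_pos; auto|].
    intros a Ha. destruct (Nat.eq_dec a k) as [->|Hne].
    + eapply Hmon; [|exact H2]. split; [apply Rmin_pos; auto|apply Rmin_r].
    + eapply Hmon; [|apply H1; lia]. split; [apply Rmin_pos; auto|apply Rmin_l].
Qed.

Lemma common_radius2 (W : nat -> nat -> R -> Prop) k :
  (forall a b d d', 0 < d' <= d -> W a b d -> W a b d') ->
  (forall a b, (a < k)%nat -> (b < k)%nat -> exists d, 0 < d /\ W a b d) ->
  exists d, 0 < d /\ forall a b, (a < k)%nat -> (b < k)%nat -> W a b d.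
Proof.
  intros Hmon H.
  destruct (common_radius (fun a d => forall b, (b < k)%nat -> W a b d) k) as [d [Hd Hall]].
  - intros a d d' Hd Wa b Hb. eapply Hmon; eauto.
  - intros a Ha. apply (common_radius (W a)); auto. intros b d d'. apply Hmon.
  - exists d. split; auto.
Qed.

(** * Direct connections along polygonal trajectories *)

Section Motion.
Variables (tau : nat) (ts : nat -> R) (pts : nat -> nat -> R * R) (eps : R).
Hypothesis Hinc : times_increasing tau ts.

Local Notation DC := (dconn tau ts pts eps).

Lemma times_lt i j : (i < j)%nat -> (j <= tau)%nat -> ts i < ts j.
Proof.
  intros Hij Hj. induction j as [|j IH]; [lia|].
  assert (ts j < ts (S j)) by (apply Hinc; lia).
  destruct (Nat.eq_dec i j) as [->|Hne]; [lra|].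
  assert (ts i < ts j) by (apply IH; lia). lra.
Qed.

Lemma times_le i j : (i <= j)%nat -> (j <= tau)%nat -> ts i <= ts j.
Proof.
  intros Hij Hj. destruct (Nat.eq_dec i j) as [->|]; [lra|]. left; apply times_lt; lia.
Qed.

Definition on_edge (i : nat) (t : R) := ts i <= t <= ts (S i).

Definition sqdist (i a b : nat) (t : R) : R :=
  let p := interp ts pts i a t in
  let q := interp ts pts i b t in
  (fst p - fst q) ^ 2 + (snd p - snd q) ^ 2.

Lemma dconn_sqdist t a b :
  DC t a b <-> exists i, (i < tau)%nat /\ on_edge i t /\ sqdist i a b t <= (2 * eps) ^ 2.
Proof. unfold dconn, sqdist, on_edge. tauto. Qed.

Lemma on_edge_unique i j t : (i < tau)%nat -> (j < tau)%nat -> on_edge i t -> on_edge j t ->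
  i = j \/ (j = S i /\ t = ts (S i)) \/ (i = S j /\ t = ts (S j)).
Proof.
  unfold on_edge; intros Hi Hj [H1 H2] [H3 H4].
  destruct (lt_eq_lt_dec i j) as [[Hlt|Heq]|Hgt]; auto.
  - destruct (Nat.eq_dec j (S i)) as [->|Hne]; [right; left; split; auto; lra|].
    assert (ts (S i) < ts j) by (apply times_lt; lia). lra.
  - destruct (Nat.eq_dec i (S j)) as [->|Hne]; [right; right; split; auto; lra|].
    assert (ts (S j) < ts i) by (apply times_lt; lia). lra.
Qed.

Lemma interp_start i x : interp ts pts i x (ts i) = pts i x.
Proof.
  unfold interp. destruct (pts i x) as [p1 p2]. simpl. f_equal; unfold Rdiv; ring.
Qed.

Lemma interp_end i x : (i < tau)%nat -> interp ts pts i x (ts (S i)) = pts (S i) x.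
Proof.
  intros Hi. unfold interp. assert (ts i < ts (S i)) by (apply Hinc; auto).
  destruct (pts i x) as [p1 p2]; destruct (pts (S i) x) as [q1 q2]; simpl.
  f_equal; field; lra.
Qed.

(* Positions are well defined: consecutive edges agree at the shared sample. *)
Lemma interp_on_edges i j x t : (i < tau)%nat -> (j < tau)%nat -> on_edge i t -> on_edge j t ->
  interp ts pts i x t = interp ts pts j x t.
Proof.
  intros Hi Hj Si Sj.
  destruct (on_edge_unique i j t Hi Hj Si Sj) as [->|[[-> ->]|[-> ->]]]; auto;
    rewrite interp_end, interp_start; auto.
Qed.

Lemma dconn_on_edge i a b t : (i < tau)%nat -> on_edge i t ->
  (DC t a b <-> sqdist i a b t <= (2 * eps) ^ 2).
Proof.
  intros Hi Si. rewrite dconn_sqdist. split.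
  - intros [j [Hj [Sj HF]]]. unfold sqdist in *.
    rewrite (interp_on_edges i j a t), (interp_on_edges i j b t); auto.
  - intros HF. exists i; auto.
Qed.

Lemma dconn_sym t a b : DC t a b -> DC t b a.
Proof.
  rewrite !dconn_sqdist. intros [i [Hi [Si HF]]]. exists i. split; [auto|split; [auto|]].
  unfold sqdist in *. eapply Rle_trans; [|exact HF]; right; ring.
Qed.

(* On edge [i], [sqdist] is a [quad] in the time elapsed since [ts i], so it is
   convex and continuous. *)
Lemma sqdist_quad i a b t :
  sqdist i a b t = quad (fst (pts i a) - fst (pts i b))
    (((fst (pts (S i) a) - fst (pts i a)) - (fst (pts (S i) b) - fst (pts i b))) / (ts (S i) - ts i))
    (snd (pts i a) - snd (pts i b))
    (((snd (pts (S i) a) - snd (pts i a)) - (snd (pts (S i) b) - snd (pts i b))) / (ts (S i) - ts i))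
    (t - ts i).
Proof. unfold sqdist, quad, interp. simpl. unfold Rdiv. ring. Qed.

Lemma sqdist_sublevel_interval i a b t1 s t2 c : t1 <= s <= t2 ->
  sqdist i a b t1 <= c -> sqdist i a b t2 <= c -> sqdist i a b s <= c.
Proof.
  intros Hs H1 H2. rewrite sqdist_quad in *.
  eapply quad_sublevel_interval; [|exact H1|exact H2]. lra.
Qed.

Lemma sqdist_gt_locally i a b t c : sqdist i a b t > c ->
  exists d, 0 < d /\ forall s, Rabs (s - t) < d -> sqdist i a b s > c.
Proof.
  intros H. rewrite sqdist_quad in H. destruct (quad_gt_locally _ _ _ _ _ _ H) as [d [Hd Hq]].
  exists d; split; auto. intros s Hs. rewrite sqdist_quad. apply Hq.
  replace (s - ts i - (t - ts i)) with (s - t) by ring. auto.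
Qed.

Lemma edge_right_of t : ts 0 <= t < ts tau -> exists i, (i < tau)%nat /\ ts i <= t < ts (S i).
Proof.
  intros Ht.
  assert (H : forall k, (k <= tau)%nat -> t < ts k -> exists i, (i < k)%nat /\ ts i <= t < ts (S i)).
  { induction k as [|k IH]; intros Hk Hk2; [lra|].
    destruct (Rlt_le_dec t (ts k)) as [Hl|Hl].
    - destruct k as [|k]; [lra|]. destruct (IH ltac:(lia) Hl) as [i [? ?]]. exists i; split; auto; lia.
    - exists k; split; auto; lra. }
  destruct (H tau (le_n _) (proj2 Ht)) as [i [? ?]]. exists i; auto.
Qed.

Lemma edge_left_of t : ts 0 < t <= ts tau -> exists i, (i < tau)%nat /\ ts i < t <= ts (S i).
Proof.
  intros Ht.
  assert (H : forall k, (k <= tau)%nat -> t <= ts k -> exists i, (i < k)%nat /\ ts i < t <= ts (S i)).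
  { induction k as [|k IH]; intros Hk Hk2; [lra|].
    destruct (Rle_lt_dec t (ts k)) as [Hl|Hl].
    - destruct k as [|k]; [lra|]. destruct (IH ltac:(lia) Hl) as [i [? ?]]. exists i; split; auto; lia.
    - exists k; split; auto; lra. }
  destruct (H tau (le_n _) (proj2 Ht)) as [i [? ?]]. exists i; auto.
Qed.

Lemma edge_of t : in_domain tau ts t -> (1 <= tau)%nat -> exists i, (i < tau)%nat /\ on_edge i t.
Proof.
  intros [H1 H2] Ht. destruct (Rlt_le_dec t (ts tau)).
  - destruct (edge_right_of t) as [i [? ?]]; [lra|]. exists i; split; auto; unfold on_edge; lra.
  - exists (pred tau). split; [lia|]. unfold on_edge. replace (S (pred tau)) with tau by lia.
    split; [|lra]. apply Rle_trans with (ts tau); [apply times_le; lia|lra].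
Qed.

Lemma dconn_outside t a b : t < ts 0 \/ ts tau < t -> ~ DC t a b.
Proof.
  intros Ht H. rewrite dconn_sqdist in H. destruct H as [i [Hi [[S1 S2] _]]].
  assert (ts 0 <= ts i) by (apply times_le; lia).
  assert (ts (S i) <= ts tau) by (apply times_le; lia). lra.
Qed.

Lemma dconn_refl t a : in_domain tau ts t -> (1 <= tau)%nat -> DC t a a.
Proof.
  intros Hd Ht. destruct (edge_of t Hd Ht) as [i [Hi Si]].
  rewrite dconn_sqdist. exists i. split; [auto|split; [auto|]]. unfold sqdist. simpl. nra.
Qed.

(* Germs: by convexity, right after (before) [t] a pair is either
   connected throughout a small interval or disconnected throughout it. *)
Lemma dconn_germ_right t a b : ts 0 <= t < ts tau ->
  exists d, 0 < d /\ ((forall s, t < s < t + d -> DC s a b) \/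
                      (forall s, t < s < t + d -> ~ DC s a b)).
Proof.
  intros Ht. destruct (edge_right_of t Ht) as [i [Hi [Hi1 Hi2]]].
  set (c := (2 * eps) ^ 2).
  assert (Hs : forall s, t < s < ts (S i) -> (DC s a b <-> sqdist i a b s <= c)).
  { intros s Hs. apply dconn_on_edge; auto. unfold on_edge; lra. }
  destruct (classic (exists s1, t < s1 < ts (S i) /\ sqdist i a b s1 <= c)) as [[s1 [Hs1 F1]]|N1].
  - destruct (classic (exists s0, t < s0 < s1 /\ ~ sqdist i a b s0 <= c)) as [[s0 [Hs0 F0]]|N0].
    + exists (s0 - t). split; [lra|]. right. intros s Hs' D.
      apply (Hs s) in D; [|lra]. apply F0. eapply sqdist_sublevel_interval; [|exact D|exact F1]. lra.
    + exists (s1 - t). split; [lra|]. left. intros s Hs'. apply Hs; [lra|].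
      apply NNPP. intro N. apply N0. exists s; split; auto; lra.
  - exists (ts (S i) - t). split; [lra|]. right. intros s Hs' D.
    apply N1. exists s; split; [lra|]. apply Hs; auto; lra.
Qed.

Lemma dconn_germ_left t a b : ts 0 < t <= ts tau ->
  exists d, 0 < d /\ ((forall s, t - d < s < t -> DC s a b) \/
                      (forall s, t - d < s < t -> ~ DC s a b)).
Proof.
  intros Ht. destruct (edge_left_of t Ht) as [i [Hi [Hi1 Hi2]]].
  set (c := (2 * eps) ^ 2).
  assert (Hs : forall s, ts i < s < t -> (DC s a b <-> sqdist i a b s <= c)).
  { intros s Hs. apply dconn_on_edge; auto. unfold on_edge; lra. }
  destruct (classic (exists s1, ts i < s1 < t /\ sqdist i a b s1 <= c)) as [[s1 [Hs1 F1]]|N1].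
  - destruct (classic (exists s0, s1 < s0 < t /\ ~ sqdist i a b s0 <= c)) as [[s0 [Hs0 F0]]|N0].
    + exists (t - s0). split; [lra|]. right. intros s Hs' D.
      apply (Hs s) in D; [|lra]. apply F0. eapply sqdist_sublevel_interval; [|exact F1|exact D]. lra.
    + exists (t - s1). split; [lra|]. left. intros s Hs'. apply Hs; [lra|].
      apply NNPP. intro N. apply N0. exists s; split; auto; lra.
  - exists (t - ts i). split; [lra|]. right. intros s Hs' D.
    apply N1. exists s; split; [lra|]. apply Hs; auto; lra.
Qed.

(* By continuity, direct connection is a closed condition. *)
Lemma dconn_closed_right t a b d : ts 0 <= t < ts tau -> 0 < d ->
  (forall s, t < s < t + d -> DC s a b) -> DC t a b.
Proof.
  intros Ht Hd H. destruct (edge_right_of t Ht) as [i [Hi [Hi1 Hi2]]].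
  rewrite (dconn_on_edge i); auto; [|unfold on_edge; lra].
  apply Rnot_lt_le. intro Hc. destruct (sqdist_gt_locally i a b t _ Hc) as [d1 [Hd1 Hc1]].
  set (m := Rmin d (Rmin d1 (ts (S i) - t))).
  assert (0 < m) by (unfold m; repeat apply Rmin_pos; lra).
  assert (m <= d) by apply Rmin_l.
  assert (m <= d1) by (eapply Rle_trans; [apply Rmin_r|apply Rmin_l]).
  assert (m <= ts (S i) - t) by (eapply Rle_trans; [apply Rmin_r|apply Rmin_r]).
  assert (Hs : DC (t + m / 2) a b) by (apply H; lra).
  rewrite (dconn_on_edge i) in Hs; auto; [|unfold on_edge; lra].
  assert (Hnear : Rabs (t + m / 2 - t) < d1) by (rewrite Rabs_right; lra).
  specialize (Hc1 _ Hnear). lra.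
Qed.

Lemma dconn_closed_left t a b d : ts 0 < t <= ts tau -> 0 < d ->
  (forall s, t - d < s < t -> DC s a b) -> DC t a b.
Proof.
  intros Ht Hd H. destruct (edge_left_of t Ht) as [i [Hi [Hi1 Hi2]]].
  rewrite (dconn_on_edge i); auto; [|unfold on_edge; lra].
  apply Rnot_lt_le. intro Hc. destruct (sqdist_gt_locally i a b t _ Hc) as [d1 [Hd1 Hc1]].
  set (m := Rmin d (Rmin d1 (t - ts i))).
  assert (0 < m) by (unfold m; repeat apply Rmin_pos; lra).
  assert (m <= d) by apply Rmin_l.
  assert (m <= d1) by (eapply Rle_trans; [apply Rmin_r|apply Rmin_l]).
  assert (m <= t - ts i) by (eapply Rle_trans; [apply Rmin_r|apply Rmin_r]).
  assert (Hs : DC (t - m / 2) a b) by (apply H; lra).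
  rewrite (dconn_on_edge i) in Hs; auto; [|unfold on_edge; lra].
  assert (Hnear : Rabs (t - m / 2 - t) < d1) by (rewrite Rabs_left; lra).
  specialize (Hc1 _ Hnear). lra.
Qed.

Definition dconn_after t a b := exists d, 0 < d /\ forall s, t < s < t + d -> DC s a b.
Definition dconn_before t a b := exists d, 0 < d /\ forall s, t - d < s < t -> DC s a b.

Lemma dconn_after_germ t a b : ts 0 <= t < ts tau ->
  exists d, 0 < d /\ forall s, t < s < t + d -> (DC s a b <-> dconn_after t a b).
Proof.
  intros Ht. destruct (dconn_germ_right t a b Ht) as [d [Hd [H|H]]].
  - exists d; split; auto. intros s Hs; split; auto. intros _. exists d; auto.
  - exists d; split; auto. intros s Hs; split; [intro D; exfalso; eapply H; eauto|].
    intros [d' [Hd' H']]. exfalso. set (m := Rmin d d').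
    assert (0 < m) by (apply Rmin_pos; auto).
    assert (m <= d) by apply Rmin_l. assert (m <= d') by apply Rmin_r.
    apply (H (t + m / 2)); [lra|]. apply H'. lra.
Qed.

Lemma dconn_before_germ t a b : ts 0 < t <= ts tau ->
  exists d, 0 < d /\ forall s, t - d < s < t -> (DC s a b <-> dconn_before t a b).
Proof.
  intros Ht. destruct (dconn_germ_left t a b Ht) as [d [Hd [H|H]]].
  - exists d; split; auto. intros s Hs; split; auto. intros _. exists d; auto.
  - exists d; split; auto. intros s Hs; split; [intro D; exfalso; eapply H; eauto|].
    intros [d' [Hd' H']]. exfalso. set (m := Rmin d d').
    assert (0 < m) by (apply Rmin_pos; auto).
    assert (m <= d) by apply Rmin_l. assert (m <= d') by apply Rmin_r.
    apply (H (t - m / 2)); [lra|]. apply H'. lra.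
Qed.

(* A pair connected right after [t] but not right before becomes connected
   at [t] (and symmetrically), by closedness of direct connection. *)
Lemma becomes_connected_of_germs t a b : ts 0 < t < ts tau ->
  dconn_after t a b -> ~ dconn_before t a b -> becomes_connected tau ts pts eps a b t.
Proof.
  intros Ht [dA [HdA After]] NB. split; [unfold in_domain; lra|]. split.
  - apply (dconn_closed_right t a b dA); auto. lra.
  - destruct (dconn_before_germ t a b ltac:(lra)) as [dL [HdL Germ]].
    intros d Hd. set (m := Rmin d (Rmin dL (t - ts 0))).
    assert (0 < m) by (unfold m; repeat apply Rmin_pos; lra).
    assert (m <= d) by apply Rmin_l.
    assert (m <= dL) by (eapply Rle_trans; [apply Rmin_r|apply Rmin_l]).
    assert (m <= t - ts 0) by (eapply Rle_trans; [apply Rmin_r|apply Rmin_r]).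
    exists (t - m / 2). split; [unfold in_domain; lra|]. split; [lra|].
    intro D. apply NB. apply (Germ (t - m / 2)); auto. lra.
Qed.

Lemma becomes_disconnected_of_germs t a b : ts 0 < t < ts tau ->
  dconn_before t a b -> ~ dconn_after t a b -> becomes_disconnected tau ts pts eps a b t.
Proof.
  intros Ht [dB [HdB Before]] NA. split; [unfold in_domain; lra|]. split.
  - apply (dconn_closed_left t a b dB); auto. lra.
  - destruct (dconn_after_germ t a b ltac:(lra)) as [dR [HdR Germ]].
    intros d Hd. set (m := Rmin d (Rmin dR (ts tau - t))).
    assert (0 < m) by (unfold m; repeat apply Rmin_pos; lra).
    assert (m <= d) by apply Rmin_l.
    assert (m <= dR) by (eapply Rle_trans; [apply Rmin_r|apply Rmin_l]).
    assert (m <= ts tau - t) by (eapply Rle_trans; [apply Rmin_r|apply Rmin_r]).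
    exists (t + m / 2). split; [unfold in_domain; lra|]. split; [lra|].
    intro D. apply NA. apply (Germ (t + m / 2)); auto. lra.
Qed.

Lemma becomes_connected_irrefl a t : (1 <= tau)%nat -> ~ becomes_connected tau ts pts eps a a t.
Proof.
  intros Htau [_ [_ Hb]]. destruct (Hb 1 ltac:(lra)) as [s [Hs [_ N]]]. apply N, dconn_refl; auto.
Qed.

Lemma becomes_disconnected_irrefl a t : (1 <= tau)%nat -> ~ becomes_disconnected tau ts pts eps a a t.
Proof.
  intros Htau [_ [_ Hb]]. destruct (Hb 1 ltac:(lra)) as [s [Hs [_ N]]]. apply N, dconn_refl; auto.
Qed.

Lemma dconn_after_uniform k t : ts 0 <= t < ts tau ->
  exists d, 0 < d /\ forall a b, (a < k)%nat -> (b < k)%nat ->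
    forall s, t < s < t + d -> (DC s a b <-> dconn_after t a b).
Proof.
  intros Ht. apply common_radius2.
  - intros a b d d' Hd' W s Hs. apply W; lra.
  - intros a b _ _. apply dconn_after_germ; auto.
Qed.

Lemma dconn_before_uniform k t : ts 0 < t <= ts tau ->
  exists d, 0 < d /\ forall a b, (a < k)%nat -> (b < k)%nat ->
    forall s, t - d < s < t -> (DC s a b <-> dconn_before t a b).
Proof.
  intros Ht. apply common_radius2.
  - intros a b d d' Hd' W s Hs. apply W; lra.
  - intros a b _ _. apply dconn_before_germ; auto.
Qed.

End Motion.

(** * Components *)

Lemma clos_rt_mono (R1 R2 : relation nat) :
  (forall a b, R1 a b -> R2 a b) ->
  forall x y, clos_refl_trans nat R1 x y -> clos_refl_trans nat R2 x y.
Proof.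
  intros H x y Hr. induction Hr; [apply rt_step; auto|apply rt_refl|eapply rt_trans; eauto].
Qed.

Lemma clos_rt_first_difference (R1 R2 : relation nat) x y :
  clos_refl_trans nat R1 x y -> ~ clos_refl_trans nat R2 x y ->
  exists p q, R1 p q /\ ~ R2 p q /\ clos_refl_trans nat R1 x p.
Proof.
  intros Hr. apply clos_rt_rt1n in Hr. induction Hr as [x|x z y Hxz Hzy IH]; intros N.
  - exfalso; apply N; apply rt_refl.
  - destruct (classic (R2 x z)) as [H2|H2].
    + destruct IH as [p [q [A [B C]]]].
      { intro C; apply N. eapply rt_trans; [apply rt_step; exact H2|exact C]. }
      exists p, q. split; auto. split; auto. eapply rt_trans; [apply rt_step; exact Hxz|exact C].
    + exists x, z. split; auto. split; auto. apply rt_refl.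
Qed.

Section Components.
Variables (n tau : nat) (ts : nat -> R) (pts : nat -> nat -> R * R) (eps : R).
Hypothesis Hinc : times_increasing tau ts.

Local Notation DC := (dconn tau ts pts eps).
Local Notation CN := (conn n tau ts pts eps).
Local Notation IC := (IsComp n tau ts pts eps).

Lemma conn_ext s (P : nat -> nat -> Prop) :
  (forall a b, (a < n)%nat -> (b < n)%nat -> (DC s a b <-> P a b)) ->
  forall x y, CN s x y <-> clos_refl_trans nat (fun a b => (a < n)%nat /\ (b < n)%nat /\ P a b) x y.
Proof.
  intros H x y. unfold conn. split; apply clos_rt_mono; intros a b [Ha [Hb D]];
    repeat split; auto; apply (H a b Ha Hb); auto.
Qed.

Lemma conn_sym t x y : CN t x y -> CN t y x.
Proof.
  intros H. unfold conn in *. induction H.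
  - apply rt_step. destruct H as [? [? ?]]. repeat split; auto. apply dconn_sym; auto.
  - apply rt_refl.
  - eapply rt_trans; eauto.
Qed.

Lemma conn_trans t x y z : CN t x y -> CN t y z -> CN t x z.
Proof. intros. unfold conn in *. eapply rt_trans; eauto. Qed.

Lemma conn_lt t x y : CN t x y -> (x < n)%nat -> (y < n)%nat.
Proof. intros H. unfold conn in H. induction H; auto. destruct H as [? [? ?]]; auto. Qed.

Lemma conn_outside t x y : t < ts 0 \/ ts tau < t -> CN t x y -> x = y.
Proof.
  intros Ht H. unfold conn in H. induction H; auto.
  - destruct H as [_ [_ D]]. exfalso; eapply dconn_outside; eauto.
  - congruence.
Qed.

Lemma comp_lt t C y : IC t C -> C y -> (y < n)%nat.
Proof. intros [x [Hx HC]] Hy. apply HC in Hy. tauto. Qed.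

Lemma comp_conn t C y1 y2 : IC t C -> C y1 -> C y2 -> CN t y1 y2.
Proof.
  intros [x [Hx HC]] H1 H2. apply HC in H1; apply HC in H2.
  eapply conn_trans; [apply conn_sym; apply H1|apply H2].
Qed.

Lemma comp_closed t C y z : IC t C -> C y -> CN t y z -> C z.
Proof.
  intros HC0 Hy Hyz. destruct HC0 as [x [Hx HC]]. apply HC. apply HC in Hy.
  split; [eapply conn_lt; eauto; tauto|]. eapply conn_trans; [apply Hy|auto].
Qed.

Lemma comp_share t C C' y : IC t C -> IC t C' -> C y -> C' y -> sameset C C'.
Proof.
  intros H H' Hy Hy' z. split; intro Hz.
  - eapply comp_closed; [exact H'|exact Hy'|]. eapply comp_conn; [exact H|exact Hy|exact Hz].
  - eapply comp_closed; [exact H|exact Hy|]. eapply comp_conn; [exact H'|exact Hy'|exact Hz].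
Qed.

Lemma comp_nonempty t C : IC t C -> exists y, C y.
Proof. intros [x [Hx HC]]. exists x. apply HC. split; auto. apply rt_refl. Qed.

Lemma becomes_connected_sym a b t :
  becomes_connected tau ts pts eps a b t -> becomes_connected tau ts pts eps b a t.
Proof.
  intros [H1 [H2 H3]]. split; auto. split; [apply dconn_sym; auto|].
  intros d Hd. destruct (H3 d Hd) as [s [? [? N]]]. exists s. split; auto. split; auto.
  intro D; apply N; apply dconn_sym; auto.
Qed.

Lemma becomes_disconnected_sym a b t :
  becomes_disconnected tau ts pts eps a b t -> becomes_disconnected tau ts pts eps b a t.
Proof.
  intros [H1 [H2 H3]]. split; auto. split; [apply dconn_sym; auto|].
  intros d Hd. destruct (H3 d Hd) as [s [? [? N]]]. exists s. split; auto. split; auto.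
  intro D; apply N; apply dconn_sym; auto.
Qed.

Lemma connection_event t y1 y2 d0 : ts 0 < t < ts tau -> 0 < d0 ->
  (forall s, t < s < t + d0 -> CN s y1 y2) -> (forall s, t - d0 < s < t -> ~ CN s y1 y2) ->
  exists p q d, event n tau ts pts eps p q true t /\ 0 < d /\
    forall s, t < s < t + d -> CN s y1 p /\ CN s y1 q.
Proof.
  intros Ht Hd0 After Before.
  assert (Htau : (1 <= tau)%nat) by (destruct tau; [lra|lia]).
  destruct (dconn_after_uniform tau ts pts eps Hinc n t ltac:(lra)) as [dR [HdR UR]].
  destruct (dconn_before_uniform tau ts pts eps Hinc n t ltac:(lra)) as [dL [HdL UL]].
  set (dA := dconn_after tau ts pts eps t). set (dB := dconn_before tau ts pts eps t).
  set (m := Rmin d0 (Rmin dR dL)).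
  assert (0 < m) by (unfold m; repeat apply Rmin_pos; lra).
  assert (m <= d0) by apply Rmin_l.
  assert (m <= dR) by (eapply Rle_trans; [apply Rmin_r|apply Rmin_l]).
  assert (m <= dL) by (eapply Rle_trans; [apply Rmin_r|apply Rmin_r]).
  assert (CnR : forall s, t < s < t + dR -> forall x y,
            CN s x y <-> clos_refl_trans nat (fun a b => (a < n)%nat /\ (b < n)%nat /\ dA a b) x y)
    by (intros s Hs; apply conn_ext; intros a b Ha Hb; apply UR; auto).
  assert (CnL : forall x y,
            CN (t - m / 2) x y <-> clos_refl_trans nat (fun a b => (a < n)%nat /\ (b < n)%nat /\ dB a b) x y)
    by (apply conn_ext; intros a b Ha Hb; apply UL; auto; lra).
  destruct (clos_rt_first_difference (fun a b => (a < n)%nat /\ (b < n)%nat /\ dA a b)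
                                     (fun a b => (a < n)%nat /\ (b < n)%nat /\ dB a b) y1 y2)
    as [p [q [[Hp [Hq HA]] [HnB Hy1p]]]].
  { apply (CnR (t + m / 2)); [lra|]. apply After; lra. }
  { rewrite <- CnL. apply Before; lra. }
  assert (Hpq : becomes_connected tau ts pts eps p q t)
    by (apply becomes_connected_of_germs; auto; intro HB; apply HnB; auto).
  assert (Hne : p <> q) by (intros <-; exact (becomes_connected_irrefl tau ts pts eps Hinc p t Htau Hpq)).
  assert (Reach : forall s, t < s < t + dR -> CN s y1 p /\ CN s y1 q).
  { intros s Hs. assert (CN s y1 p) by (apply CnR; auto). split; auto.
    eapply conn_trans; [eauto|]. apply CnR; auto. apply rt_step. auto. }
  destruct (Nat.lt_gt_cases p q) as [[Hlt|Hlt] _]; [auto| |].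
  - exists p, q, dR. split; [split; auto|split; auto].
  - exists q, p, dR. split; [split; [lia|split; auto]; apply becomes_connected_sym; auto|].
    split; auto. intros s Hs. destruct (Reach s Hs). auto.
Qed.

Lemma disconnection_event t y1 y2 d0 : ts 0 < t < ts tau -> 0 < d0 ->
  (forall s, t - d0 < s < t -> CN s y1 y2) -> (forall s, t < s < t + d0 -> ~ CN s y1 y2) ->
  exists p q d, event n tau ts pts eps p q false t /\ 0 < d /\
    forall s, t - d < s < t -> CN s y1 p /\ CN s y1 q.
Proof.
  intros Ht Hd0 Before After.
  assert (Htau : (1 <= tau)%nat) by (destruct tau; [lra|lia]).
  destruct (dconn_after_uniform tau ts pts eps Hinc n t ltac:(lra)) as [dR [HdR UR]].
  destruct (dconn_before_uniform tau ts pts eps Hinc n t ltac:(lra)) as [dL [HdL UL]].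
  set (dA := dconn_after tau ts pts eps t). set (dB := dconn_before tau ts pts eps t).
  set (m := Rmin d0 (Rmin dR dL)).
  assert (0 < m) by (unfold m; repeat apply Rmin_pos; lra).
  assert (m <= d0) by apply Rmin_l.
  assert (m <= dR) by (eapply Rle_trans; [apply Rmin_r|apply Rmin_l]).
  assert (m <= dL) by (eapply Rle_trans; [apply Rmin_r|apply Rmin_r]).
  assert (CnL : forall s, t - dL < s < t -> forall x y,
            CN s x y <-> clos_refl_trans nat (fun a b => (a < n)%nat /\ (b < n)%nat /\ dB a b) x y)
    by (intros s Hs; apply conn_ext; intros a b Ha Hb; apply UL; auto).
  assert (CnR : forall x y,
            CN (t + m / 2) x y <-> clos_refl_trans nat (fun a b => (a < n)%nat /\ (b < n)%nat /\ dA a b) x y)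
    by (apply conn_ext; intros a b Ha Hb; apply UR; auto; lra).
  destruct (clos_rt_first_difference (fun a b => (a < n)%nat /\ (b < n)%nat /\ dB a b)
                                     (fun a b => (a < n)%nat /\ (b < n)%nat /\ dA a b) y1 y2)
    as [p [q [[Hp [Hq HB]] [HnA Hy1p]]]].
  { apply (CnL (t - m / 2)); [lra|]. apply Before; lra. }
  { rewrite <- CnR. apply After; lra. }
  assert (Hpq : becomes_disconnected tau ts pts eps p q t)
    by (apply becomes_disconnected_of_germs; auto; intro HA; apply HnA; auto).
  assert (Hne : p <> q)
    by (intros <-; exact (becomes_disconnected_irrefl tau ts pts eps Hinc p t Htau Hpq)).
  assert (Reach : forall s, t - dL < s < t -> CN s y1 p /\ CN s y1 q).
  { intros s Hs. assert (CN s y1 p) by (apply CnL; auto). split; auto.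
    eapply conn_trans; [eauto|]. apply CnL; auto. apply rt_step. auto. }
  destruct (Nat.lt_gt_cases p q) as [[Hlt|Hlt] _]; [auto| |].
  - exists p, q, dL. split; [split; auto|split; auto].
  - exists q, p, dL. split; [split; [lia|split; auto]; apply becomes_disconnected_sym; auto|].
    split; auto. intros s Hs. destruct (Reach s Hs). auto.
Qed.

End Components.

Lemma le_of_injective_rel (N M : nat) (Rl : nat -> nat -> Prop) :
  (forall v, (v < N)%nat -> exists c, (c < M)%nat /\ Rl v c) ->
  (forall v v' c, (v < N)%nat -> (v' < N)%nat -> Rl v c -> Rl v' c -> v = v') -> (N <= M)%nat.
Proof.
  intros Hex Hinj.
  set (f := fun v => epsilon (inhabits 0%nat) (fun c => (c < M)%nat /\ Rl v c)).
  assert (Hf : forall v, (v < N)%nat -> (f v < M)%nat /\ Rl v (f v)).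
  { intros v Hv. unfold f. apply epsilon_spec. apply Hex; auto. }
  rewrite <- (length_seq N 0), <- (length_seq M 0), <- (length_map f (seq 0 N)).
  apply NoDup_incl_length.
  - apply NoDup_map_NoDup_ForallPairs; [|apply seq_NoDup].
    intros x y Hx Hy E. apply in_seq in Hx, Hy.
    destruct (Hf x) as [_ H1]; [lia|]. destruct (Hf y) as [_ H2]; [lia|].
    rewrite E in H1. eapply Hinj; eauto; lia.
  - intros c Hc. apply in_map_iff in Hc. destruct Hc as [v [<- Hv]]. apply in_seq in Hv.
    apply in_seq. destruct (Hf v); lia.
Qed.

Lemma filter_filter_length (g h : nat -> bool) L :
  (length (filter g (filter h L)) <= length (filter g L))%nat.
Proof.
  induction L as [|a L IH]; simpl; auto.
  destruct (h a) eqn:Eh, (g a) eqn:Eg; simpl; rewrite ?Eg; simpl; lia.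
Qed.

Lemma length_le_fibers (f : nat -> nat) (k N : nat) L :
  (forall e, In e L -> (f e < N)%nat) ->
  (forall v, (v < N)%nat -> (length (filter (fun e => f e =? v) L) <= k)%nat) ->
  (length L <= k * N)%nat.
Proof.
  revert L. induction N as [|N IH]; intros L Hf Hk.
  - destruct L as [|e L]; [simpl; lia|]. specialize (Hf e (or_introl eq_refl)). lia.
  - rewrite <- (filter_length (fun e => f e =? N) L).
    assert (length (filter (fun e => f e =? N) L) <= k)%nat by (apply Hk; lia).
    assert (length (filter (fun e => negb (f e =? N)) L) <= k * N)%nat; [|lia].
    apply IH.
    + intros e He. apply filter_In in He. destruct He as [He Hn].
      apply negb_true_iff, Nat.eqb_neq in Hn. specialize (Hf e He). lia.
    + intros v Hv. eapply Nat.le_trans; [apply filter_filter_length|]. apply Hk; lia.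
Qed.

Lemma filter_witness (f : nat -> bool) l : (1 <= length (filter f l))%nat ->
  exists e, In e l /\ f e = true.
Proof.
  intros H. destruct (filter f l) as [|e r] eqn:E; simpl in H; [lia|].
  assert (Hin : In e (filter f l)) by (rewrite E; left; auto).
  apply filter_In in Hin. exists e; tauto.
Qed.

Lemma filter_two_witnesses (f : nat -> bool) l : NoDup l -> length (filter f l) = 2%nat ->
  exists e1 e2, e1 <> e2 /\ In e1 l /\ In e2 l /\ f e1 = true /\ f e2 = true.
Proof.
  intros ND H. destruct (filter f l) as [|e1 [|e2 r]] eqn:E; simpl in H; try lia.
  assert (ND2 : NoDup (filter f l)) by (apply NoDup_filter; auto).
  rewrite E in ND2. inversion ND2 as [|? ? Hnin _]; subst.
  assert (I1 : In e1 (filter f l)) by (rewrite E; left; auto).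
  assert (I2 : In e2 (filter f l)) by (rewrite E; right; left; auto).
  apply filter_In in I1, I2.
  exists e1, e2. split; [intro Heq; apply Hnin; rewrite Heq; left; auto|tauto].
Qed.

Lemma filter_length_exact (f : nat -> bool) N L : NoDup L -> (forall e, In e L -> (e < N)%nat) ->
  (forall e, (e < N)%nat -> (f e = true <-> In e L)) -> length (filter f (seq 0 N)) = length L.
Proof.
  intros ND HL Hf. apply Permutation_length, NoDup_Permutation; auto.
  - apply NoDup_filter, seq_NoDup.
  - intros e. rewrite filter_In, in_seq. split.
    + intros [He Fe]. apply Hf; auto; lia.
    + intros I. pose proof (HL e I). split; [lia|]. apply Hf; auto.
Qed.

(** * The upper bound

    A start (end) vertex is
    determined by any entity of its outgoing (incoming) edge, since the
    edges alive at one time carry distinct components.  A merge vertex at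
    time [t] lies on a trajectory edge [i]; by [connection_event] some pair
    [a < b] becomes directly connected at [t], and by convexity a pair
    becomes connected at most once per trajectory edge, so [(a, b, i)]
    determines the vertex; symmetrically for splits.  This gives at most
    [4 n^2 tau] vertices; every vertex has in-degree at most 2, hence at
    most [8 n^2 tau] edges. *)

Section UpperBound.
Variables (n tau : nat) (ts : nat -> R) (pts : nat -> nat -> R * R) (eps : R) (G : ReebGraph).
Hypothesis Hinc : times_increasing tau ts.
Hypothesis Htau : (1 <= tau)%nat.
Hypothesis HR : IsReebGraph n tau ts pts eps G.

Local Notation vt v := (vtime G v).
Local Notation IC := (IsComp n tau ts pts eps).
Local Notation DC := (dconn tau ts pts eps).
Local Notation CN := (conn n tau ts pts eps).

Lemma edge_spec e : (e < ne G)%nat ->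
  (src G e < nv G)%nat /\ (dst G e < nv G)%nat /\ vt (src G e) < vt (dst G e) /\
  forall t, vt (src G e) < t < vt (dst G e) -> IC t (ecomp G e).
Proof. destruct HR as [H _]. apply H. Qed.

Lemma edge_unique e e' t : (e < ne G)%nat -> (e' < ne G)%nat ->
  vt (src G e) < t < vt (dst G e) -> vt (src G e') < t < vt (dst G e') ->
  sameset (ecomp G e) (ecomp G e') -> e = e'.
Proof.
  destruct HR as [_ [_ [_ H]]]. intros He He' T1 T2 S.
  apply NNPP. intro Hne. exact (H e e' t He He' Hne T1 T2 S).
Qed.

Lemma edge_nonempty e : (e < ne G)%nat -> exists y, ecomp G e y /\ (y < n)%nat.
Proof.
  intros He. destruct (edge_spec e He) as [_ [_ [Ht Hc]]].
  assert (Hmid : IC ((vt (src G e) + vt (dst G e)) / 2) (ecomp G e)) by (apply Hc; lra).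
  destruct (comp_nonempty n tau ts pts eps _ _ Hmid) as [y Hy].
  exists y. split; auto. eapply comp_lt; eauto.
Qed.

Lemma edge_after_unique e e' x : (e < ne G)%nat -> (e' < ne G)%nat ->
  vt (src G e) = vt (src G e') -> ecomp G e x -> ecomp G e' x -> e = e'.
Proof.
  intros He He' Et X X'.
  destruct (edge_spec e He) as [_ [_ [T C]]]. destruct (edge_spec e' He') as [_ [_ [T' C']]].
  set (m := Rmin (vt (dst G e) - vt (src G e)) (vt (dst G e') - vt (src G e))).
  assert (0 < m) by (apply Rmin_pos; lra).
  assert (m <= vt (dst G e) - vt (src G e)) by apply Rmin_l.
  assert (m <= vt (dst G e') - vt (src G e)) by apply Rmin_r.
  apply (edge_unique e e' (vt (src G e) + m / 2)); auto; try lra.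
  apply (comp_share n tau ts pts eps (vt (src G e) + m / 2) _ _ x); auto; [apply C|apply C']; lra.
Qed.

Lemma edge_before_unique e e' x : (e < ne G)%nat -> (e' < ne G)%nat ->
  vt (dst G e) = vt (dst G e') -> ecomp G e x -> ecomp G e' x -> e = e'.
Proof.
  intros He He' Et X X'.
  destruct (edge_spec e He) as [_ [_ [T C]]]. destruct (edge_spec e' He') as [_ [_ [T' C']]].
  set (m := Rmin (vt (dst G e) - vt (src G e)) (vt (dst G e) - vt (src G e'))).
  assert (0 < m) by (apply Rmin_pos; lra).
  assert (m <= vt (dst G e) - vt (src G e)) by apply Rmin_l.
  assert (m <= vt (dst G e) - vt (src G e')) by apply Rmin_r.
  apply (edge_unique e e' (vt (dst G e) - m / 2)); auto; try lra.
  apply (comp_share n tau ts pts eps (vt (dst G e) - m / 2) _ _ x); auto; [apply C|apply C']; lra.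
Qed.

Lemma merge_edges v : (v < nv G)%nat -> vkind G v = VMerge ->
  exists e1 e2 e3, (e1 < ne G)%nat /\ (e2 < ne G)%nat /\ (e3 < ne G)%nat /\
    dst G e1 = v /\ dst G e2 = v /\ src G e3 = v /\
    (forall y, ~ (ecomp G e1 y /\ ecomp G e2 y)) /\
    sameset (ecomp G e3) (fun y => ecomp G e1 y \/ ecomp G e2 y).
Proof.
  intros Hv Hk. destruct HR as [_ [H _]]. specialize (H v Hv). rewrite Hk in H.
  destruct H as [Hin [Hout Hm]]. unfold indeg, outdeg in *.
  destruct (filter_two_witnesses _ _ (seq_NoDup _ _) Hin) as [e1 [e2 [Hne [I1 [I2 [F1 F2]]]]]].
  destruct (filter_witness (fun e => Nat.eqb (src G e) v) (seq 0 (ne G))) as [e3 [I3 F3]]; [lia|].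
  apply in_seq in I1, I2, I3. apply Nat.eqb_eq in F1, F2, F3.
  destruct (Hm e1 e2 e3) as [D S]; try lia; auto.
  exists e1, e2, e3. refine (conj _ (conj _ (conj _ (conj F1 (conj F2 (conj F3 (conj D S))))))); lia.
Qed.

Lemma split_edges v : (v < nv G)%nat -> vkind G v = VSplit ->
  exists e1 e2 e3, (e1 < ne G)%nat /\ (e2 < ne G)%nat /\ (e3 < ne G)%nat /\
    src G e1 = v /\ src G e2 = v /\ dst G e3 = v /\
    (forall y, ~ (ecomp G e1 y /\ ecomp G e2 y)) /\
    sameset (ecomp G e3) (fun y => ecomp G e1 y \/ ecomp G e2 y).
Proof.
  intros Hv Hk. destruct HR as [_ [H _]]. specialize (H v Hv). rewrite Hk in H.
  destruct H as [Hin [Hout Hm]]. unfold indeg, outdeg in *.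
  destruct (filter_two_witnesses _ _ (seq_NoDup _ _) Hout) as [e1 [e2 [Hne [I1 [I2 [F1 F2]]]]]].
  destruct (filter_witness (fun e => Nat.eqb (dst G e) v) (seq 0 (ne G))) as [e3 [I3 F3]]; [lia|].
  apply in_seq in I1, I2, I3. apply Nat.eqb_eq in F1, F2, F3.
  destruct (Hm e1 e2 e3) as [D S]; try lia; auto.
  exists e1, e2, e3. refine (conj _ (conj _ (conj _ (conj F1 (conj F2 (conj F3 (conj D S))))))); lia.
Qed.

(* An edge carrying two entities lives inside the time domain: outside of
   it every component is a singleton. *)
Lemma edge_span_in_domain e y1 y2 : (e < ne G)%nat -> y1 <> y2 ->
  ecomp G e y1 -> ecomp G e y2 -> ts 0 <= vt (src G e) /\ vt (dst G e) <= ts tau.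
Proof.
  intros He Hne Y1 Y2. destruct (edge_spec e He) as [_ [_ [T C]]].
  assert (Apart : forall s, vt (src G e) < s < vt (dst G e) -> ~ (s < ts 0 \/ ts tau < s)).
  { intros s Hs Out. apply Hne. apply (conn_outside n tau ts pts eps Hinc s); auto.
    apply (comp_conn n tau ts pts eps s (ecomp G e)); auto. }
  split; apply Rnot_lt_le; intro Hout.
  - set (s := (vt (src G e) + Rmin (vt (dst G e)) (ts 0)) / 2).
    assert (Rmin (vt (dst G e)) (ts 0) <= vt (dst G e)) by apply Rmin_l.
    assert (Rmin (vt (dst G e)) (ts 0) <= ts 0) by apply Rmin_r.
    assert (vt (src G e) < Rmin (vt (dst G e)) (ts 0)) by (apply Rmin_glb_lt; lra).
    apply (Apart s); unfold s; lra.
  - set (s := (Rmax (vt (src G e)) (ts tau) + vt (dst G e)) / 2).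
    assert (vt (src G e) <= Rmax (vt (src G e)) (ts tau)) by apply Rmax_l.
    assert (ts tau <= Rmax (vt (src G e)) (ts tau)) by apply Rmax_r.
    assert (Rmax (vt (src G e)) (ts tau) < vt (dst G e)) by (apply Rmax_lub_lt; lra).
    apply (Apart s); unfold s; lra.
Qed.

Lemma joint_edge_two_entities e1 e2 e3 : (e1 < ne G)%nat -> (e2 < ne G)%nat ->
  (forall y, ~ (ecomp G e1 y /\ ecomp G e2 y)) ->
  sameset (ecomp G e3) (fun y => ecomp G e1 y \/ ecomp G e2 y) ->
  exists y1 y2, y1 <> y2 /\ ecomp G e1 y1 /\ ecomp G e2 y2 /\ ecomp G e3 y1 /\ ecomp G e3 y2.
Proof.
  intros H1 H2 Dis Sm.
  destruct (edge_nonempty e1 H1) as [y1 [Y1 _]]. destruct (edge_nonempty e2 H2) as [y2 [Y2 _]].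
  exists y1, y2. split; [intros <-; exact (Dis y1 (conj Y1 Y2))|].
  split; auto. split; auto. split; apply Sm; auto.
Qed.

Lemma vertex_time_in_domain v : (v < nv G)%nat -> ts 0 <= vt v <= ts tau.
Proof.
  intros Hv. assert (H0T : ts 0 <= ts tau) by (apply (times_le tau ts Hinc); lia).
  destruct HR as [_ [HK _]]. pose proof (HK v Hv) as Hk.
  destruct (vkind G v) eqn:K.
  - destruct Hk as [_ [_ [-> _]]]. lra.
  - destruct Hk as [_ [_ [-> _]]]. lra.
  - destruct (merge_edges v Hv K) as [e1 [e2 [e3 [H1 [H2 [H3 [_ [_ [S3 [Dis Sm]]]]]]]]]].
    destruct (joint_edge_two_entities e1 e2 e3 H1 H2 Dis Sm) as [y1 [y2 [Hne [_ [_ [Y1 Y2]]]]]].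
    destruct (edge_span_in_domain e3 y1 y2 H3 Hne Y1 Y2).
    destruct (edge_spec e3 H3) as [_ [_ [T3 _]]]. rewrite S3 in *. lra.
  - destruct (split_edges v Hv K) as [e1 [e2 [e3 [H1 [H2 [H3 [_ [_ [D3 [Dis Sm]]]]]]]]]].
    destruct (joint_edge_two_entities e1 e2 e3 H1 H2 Dis Sm) as [y1 [y2 [Hne [_ [_ [Y1 Y2]]]]]].
    destruct (edge_span_in_domain e3 y1 y2 H3 Hne Y1 Y2).
    destruct (edge_spec e3 H3) as [_ [_ [T3 _]]]. rewrite D3 in *. lra.
Qed.

(* A merge vertex happens at a connection event of two entities of its
   outgoing edge: right after [t] the outgoing edge joins an entity of each
   incoming edge, right before [t] these two entities were apart. *)
Lemma merge_event v : (v < nv G)%nat -> vkind G v = VMerge ->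
  exists e a b, (e < ne G)%nat /\ src G e = v /\ ecomp G e a /\
    event n tau ts pts eps a b true (vt v) /\ ts 0 < vt v < ts tau.
Proof.
  intros Hv K.
  destruct (merge_edges v Hv K) as [e1 [e2 [e3 [H1 [H2 [H3 [D1 [D2 [S3 [Dis Sm]]]]]]]]]].
  set (t := vt v).
  destruct (edge_spec e1 H1) as [Hs1 [_ [T1 C1]]]. rewrite D1 in T1, C1.
  destruct (edge_spec e3 H3) as [_ [Hd3 [T3 C3]]]. rewrite S3 in T3, C3.
  pose proof (vertex_time_in_domain (src G e1) Hs1).
  pose proof (vertex_time_in_domain (dst G e3) Hd3).
  fold t in T1, T3, C1, C3.
  destruct (joint_edge_two_entities e1 e2 e3 H1 H2 Dis Sm) as [y1 [y2 [_ [Y1 [Y2 [Y13 Y23]]]]]].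
  set (d0 := Rmin (vt (dst G e3) - t) (t - vt (src G e1))).
  assert (0 < d0) by (apply Rmin_pos; lra).
  assert (d0 <= vt (dst G e3) - t) by apply Rmin_l.
  assert (d0 <= t - vt (src G e1)) by apply Rmin_r.
  destruct (connection_event n tau ts pts eps Hinc t y1 y2 d0) as [p [q [d [Ev [Hd Reach]]]]];
    auto; try lra.
  - intros s Hs. apply (comp_conn n tau ts pts eps s (ecomp G e3)); auto. apply C3; lra.
  - intros s Hs Cn. apply (Dis y2). split; auto.
    apply (comp_closed n tau ts pts eps s (ecomp G e1) y1); auto. apply C1. lra.
  - set (s := t + Rmin d d0 / 2).
    assert (0 < Rmin d d0) by (apply Rmin_pos; lra).
    assert (Rmin d d0 <= d) by apply Rmin_l. assert (Rmin d d0 <= d0) by apply Rmin_r.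
    exists e3, p, q. split; auto. split; auto. split; [|split; auto; lra].
    apply (comp_closed n tau ts pts eps s (ecomp G e3) y1); [apply C3; unfold s; lra|auto|].
    apply Reach. unfold s. lra.
Qed.

Lemma split_event v : (v < nv G)%nat -> vkind G v = VSplit ->
  exists e a b, (e < ne G)%nat /\ dst G e = v /\ ecomp G e a /\
    event n tau ts pts eps a b false (vt v) /\ ts 0 < vt v < ts tau.
Proof.
  intros Hv K.
  destruct (split_edges v Hv K) as [e1 [e2 [e3 [H1 [H2 [H3 [D1 [D2 [S3 [Dis Sm]]]]]]]]]].
  set (t := vt v).
  destruct (edge_spec e1 H1) as [_ [Hd1 [T1 C1]]]. rewrite D1 in T1, C1.
  destruct (edge_spec e3 H3) as [Hs3 [_ [T3 C3]]]. rewrite S3 in T3, C3.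
  pose proof (vertex_time_in_domain (dst G e1) Hd1).
  pose proof (vertex_time_in_domain (src G e3) Hs3).
  fold t in T1, T3, C1, C3.
  destruct (joint_edge_two_entities e1 e2 e3 H1 H2 Dis Sm) as [y1 [y2 [_ [Y1 [Y2 [Y13 Y23]]]]]].
  set (d0 := Rmin (t - vt (src G e3)) (vt (dst G e1) - t)).
  assert (0 < d0) by (apply Rmin_pos; lra).
  assert (d0 <= t - vt (src G e3)) by apply Rmin_l.
  assert (d0 <= vt (dst G e1) - t) by apply Rmin_r.
  destruct (disconnection_event n tau ts pts eps Hinc t y1 y2 d0) as [p [q [d [Ev [Hd Reach]]]]];
    auto; try lra.
  - intros s Hs. apply (comp_conn n tau ts pts eps s (ecomp G e3)); auto. apply C3; lra.
  - intros s Hs Cn. apply (Dis y2). split; auto.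
    apply (comp_closed n tau ts pts eps s (ecomp G e1) y1); auto. apply C1. lra.
  - set (s := t - Rmin d d0 / 2).
    assert (0 < Rmin d d0) by (apply Rmin_pos; lra).
    assert (Rmin d d0 <= d) by apply Rmin_l. assert (Rmin d d0 <= d0) by apply Rmin_r.
    exists e3, p, q. split; auto. split; auto. split; [|split; auto; lra].
    apply (comp_closed n tau ts pts eps s (ecomp G e3) y1); [apply C3; unfold s; lra|auto|].
    apply Reach. unfold s. lra.
Qed.

(* By convexity of the squared distance, a pair becomes connected at most
   once on each half-open trajectory edge [ts i, ts (i+1)), and becomes
   disconnected at most once on each [(ts i, ts (i+1)]]. *)
Lemma connection_time_unique a b t t' i : (i < tau)%nat ->
  becomes_connected tau ts pts eps a b t -> becomes_connected tau ts pts eps a b t' ->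
  ts i <= t < ts (S i) -> ts i <= t' < ts (S i) -> t = t'.
Proof.
  intros Hi.
  assert (Strict : forall t1 t2, becomes_connected tau ts pts eps a b t1 ->
            becomes_connected tau ts pts eps a b t2 ->
            ts i <= t1 < ts (S i) -> ts i <= t2 < ts (S i) -> ~ t1 < t2).
  { intros t1 t2 [_ [D1 _]] [_ [D2 Hb]] S1 S2 Hlt.
    destruct (Hb (t2 - t1) ltac:(lra)) as [s [_ [Hs N]]]. apply N.
    rewrite (dconn_on_edge tau ts pts eps Hinc i) in D1, D2 |- *; auto; try (unfold on_edge; lra).
    eapply sqdist_sublevel_interval; [|exact D1|exact D2]. lra. }
  intros B B' S S'. destruct (Rtotal_order t t') as [Ho|[Ho|Ho]]; auto; exfalso.
  - exact (Strict t t' B B' S S' Ho).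
  - exact (Strict t' t B' B S' S Ho).
Qed.

Lemma disconnection_time_unique a b t t' i : (i < tau)%nat ->
  becomes_disconnected tau ts pts eps a b t -> becomes_disconnected tau ts pts eps a b t' ->
  ts i < t <= ts (S i) -> ts i < t' <= ts (S i) -> t = t'.
Proof.
  intros Hi.
  assert (Strict : forall t1 t2, becomes_disconnected tau ts pts eps a b t1 ->
            becomes_disconnected tau ts pts eps a b t2 ->
            ts i < t1 <= ts (S i) -> ts i < t2 <= ts (S i) -> ~ t1 < t2).
  { intros t1 t2 [_ [D1 Hb]] [_ [D2 _]] S1 S2 Hlt.
    destruct (Hb (t2 - t1) ltac:(lra)) as [s [_ [Hs N]]]. apply N.
    rewrite (dconn_on_edge tau ts pts eps Hinc i) in D1, D2 |- *; auto; try (unfold on_edge; lra).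
    eapply sqdist_sublevel_interval; [|exact D1|exact D2]. lra. }
  intros B B' S S'. destruct (Rtotal_order t t') as [Ho|[Ho|Ho]]; auto; exfalso.
  - exact (Strict t t' B B' S S' Ho).
  - exact (Strict t' t B' B S' S Ho).
Qed.

(** Labels: every vertex gets a label [< n * n * tau], and within one
    vertex kind the label determines the vertex. *)

Definition pair_code a b i := ((a * n + b) * tau + i)%nat.

Lemma pair_code_lt a b i : (a < n)%nat -> (b < n)%nat -> (i < tau)%nat ->
  (pair_code a b i < n * n * tau)%nat.
Proof. intros. unfold pair_code. assert (a * n + b < n * n)%nat by nia. nia. Qed.

Lemma pair_code_inj a b i a' b' i' : (b < n)%nat -> (i < tau)%nat -> (b' < n)%nat -> (i' < tau)%nat ->
  pair_code a b i = pair_code a' b' i' -> a = a' /\ b = b' /\ i = i'.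
Proof.
  unfold pair_code. intros Hb Hi Hb' Hi' E.
  destruct (mul_add_inj _ _ _ _ _ Hi Hi' E) as [E1 <-].
  destruct (mul_add_inj _ _ _ _ _ Hb Hb' E1) as [<- <-]. auto.
Qed.

Definition vertex_label (v l : nat) : Prop :=
  match vkind G v with
  | VStart => exists e, (e < ne G)%nat /\ src G e = v /\ ecomp G e l
  | VEnd => exists e, (e < ne G)%nat /\ dst G e = v /\ ecomp G e l
  | VMerge => exists e a b i, (e < ne G)%nat /\ src G e = v /\ ecomp G e a /\
      event n tau ts pts eps a b true (vt v) /\ (i < tau)%nat /\ ts i <= vt v < ts (S i) /\
      l = pair_code a b i
  | VSplit => exists e a b i, (e < ne G)%nat /\ dst G e = v /\ ecomp G e a /\
      event n tau ts pts eps a b false (vt v) /\ (i < tau)%nat /\ ts i < vt v <= ts (S i) /\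
      l = pair_code a b i
  end.

Lemma vertex_label_exists v : (v < nv G)%nat -> exists l, (l < n * n * tau)%nat /\ vertex_label v l.
Proof.
  intros Hv. unfold vertex_label. destruct HR as [_ [HK _]]. pose proof (HK v Hv) as Hk.
  destruct (vkind G v) eqn:K.
  - destruct Hk as [_ [Hout _]]. unfold outdeg in Hout.
    destruct (filter_witness (fun e => Nat.eqb (src G e) v) (seq 0 (ne G))) as [e [I F]]; [lia|].
    apply in_seq in I. apply Nat.eqb_eq in F. destruct (edge_nonempty e ltac:(lia)) as [x [X Hx]].
    exists x. split; [nia|]. exists e. split; [lia|auto].
  - destruct Hk as [Hin _]. unfold indeg in Hin.
    destruct (filter_witness (fun e => Nat.eqb (dst G e) v) (seq 0 (ne G))) as [e [I F]]; [lia|].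
    apply in_seq in I. apply Nat.eqb_eq in F. destruct (edge_nonempty e ltac:(lia)) as [x [X Hx]].
    exists x. split; [nia|]. exists e. split; [lia|auto].
  - destruct (merge_event v Hv K) as [e [a [b [He [Se [Ea [Ev Ht]]]]]]].
    destruct (edge_right_of tau ts (vt v)) as [i [Hi Si]]; [lra|].
    pose proof Ev as [Hab [Hb _]].
    exists (pair_code a b i). split; [apply pair_code_lt; lia|].
    exists e, a, b, i. do 6 (split; [auto|]). reflexivity.
  - destruct (split_event v Hv K) as [e [a [b [He [Se [Ea [Ev Ht]]]]]]].
    destruct (edge_left_of tau ts (vt v)) as [i [Hi Si]]; [lra|].
    pose proof Ev as [Hab [Hb _]].
    exists (pair_code a b i). split; [apply pair_code_lt; lia|].
    exists e, a, b, i. do 6 (split; [auto|]). reflexivity.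
Qed.

(* Within one kind, labels determine vertices: the edges leaving (entering)
   the two vertices start (end) at the same time and share an entity. *)
Lemma vertex_label_inj v v' l : (v < nv G)%nat -> (v' < nv G)%nat -> vkind G v = vkind G v' ->
  vertex_label v l -> vertex_label v' l -> v = v'.
Proof.
  intros Hv Hv' K. unfold vertex_label. rewrite <- K.
  destruct HR as [_ [HK _]]. pose proof (HK v Hv) as Hk. pose proof (HK v' Hv') as Hk'.
  rewrite <- K in Hk'. destruct (vkind G v).
  - intros [e [He [<- X]]] [e' [He' [<- X']]].
    destruct Hk as [_ [_ [T _]]]. destruct Hk' as [_ [_ [T' _]]].
    f_equal. apply (edge_after_unique e e' l); auto. congruence.
  - intros [e [He [<- X]]] [e' [He' [<- X']]].
    destruct Hk as [_ [_ [T _]]]. destruct Hk' as [_ [_ [T' _]]].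
    f_equal. apply (edge_before_unique e e' l); auto. congruence.
  - intros [e [a [b [i [He [<- [Ea [Ev [Hi [Si ->]]]]]]]]]]
           [e' [a' [b' [i' [He' [<- [Ea' [Ev' [Hi' [Si' Ec]]]]]]]]]].
    destruct Ev as [_ [Hb Bc]]. destruct Ev' as [_ [Hb' Bc']].
    destruct (pair_code_inj _ _ _ _ _ _ Hb Hi Hb' Hi' Ec) as [<- [<- <-]].
    f_equal. apply (edge_after_unique e e' a); auto.
    apply (connection_time_unique a b _ _ i); auto.
  - intros [e [a [b [i [He [<- [Ea [Ev [Hi [Si ->]]]]]]]]]]
           [e' [a' [b' [i' [He' [<- [Ea' [Ev' [Hi' [Si' Ec]]]]]]]]]].
    destruct Ev as [_ [Hb Bc]]. destruct Ev' as [_ [Hb' Bc']].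
    destruct (pair_code_inj _ _ _ _ _ _ Hb Hi Hb' Hi' Ec) as [<- [<- <-]].
    f_equal. apply (edge_before_unique e e' a); auto.
    apply (disconnection_time_unique a b _ _ i); auto.
Qed.

Definition kind_index (k : VKind) : nat :=
  match k with VStart => 0 | VEnd => 1 | VMerge => 2 | VSplit => 3 end.

(* Codes [kind_index * M + label] with [M = n * n * tau] are injective. *)
Lemma vertex_count : (nv G <= 4 * (n * n * tau))%nat.
Proof.
  set (M := (n * n * tau)%nat).
  apply (le_of_injective_rel (nv G) (4 * M)
           (fun v c => exists l, (l < M)%nat /\ vertex_label v l /\ c = (kind_index (vkind G v) * M + l)%nat)).
  - intros v Hv. destruct (vertex_label_exists v Hv) as [l [Hl Lv]].
    exists (kind_index (vkind G v) * M + l)%nat. split; [|exists l; auto].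
    assert (kind_index (vkind G v) <= 3)%nat by (destruct (vkind G v); simpl; lia). nia.
  - intros v v' c Hv Hv' [l [Hl [Lv ->]]] [l' [Hl' [Lv' E]]].
    destruct (mul_add_inj _ _ _ _ _ Hl Hl' E) as [Ek <-].
    apply (vertex_label_inj v v' l); auto.
    destruct (vkind G v), (vkind G v'); simpl in Ek; congruence.
Qed.

(* Every edge enters a vertex, and no vertex has in-degree above 2. *)
Lemma edge_count : (ne G <= 2 * nv G)%nat.
Proof.
  rewrite <- (length_seq (ne G) 0). apply (length_le_fibers (dst G)).
  - intros e He. apply in_seq in He. apply edge_spec. lia.
  - intros v Hv. destruct HR as [_ [HK _]]. specialize (HK v Hv).
    change (indeg G v <= 2)%nat. destruct (vkind G v); destruct HK as [Hi _]; lia.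
Qed.

Theorem reeb_upper_bound : (nv G <= 8 * tau * n * n)%nat /\ (ne G <= 8 * tau * n * n)%nat.
Proof. pose proof vertex_count. pose proof edge_count. split; nia. Qed.

End UpperBound.

(** * The worst-case input

    Entities [0 .. h-1] are posts, resting at [(j, 0)]; entity [h + k] is a
    runner that starts at [(-k h - 1, 0)] and moves with speed [1] to the
    right along even trajectory edges and back along odd ones, each edge
    lasting [period = h w + 1].  With [eps = 1/8], two entities are directly
    connected iff they are at distance [<= 1/4]: posts are [1] apart and
    runners [h] apart, so only a post and a runner can be connected, and
    runner [k] is near post [j] only within [1/4] of their meeting time.
    Meetings are at distinct integer times, so at any time at most one pair
    is connected; this yields [tau h w] pair components and an explicit
    Reeb graph. *)

Lemma INR_lt_succ (a b : nat) : (a < b)%nat -> INR a + 1 <= INR b.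
Proof. intros H. rewrite <- S_INR. apply le_INR. lia. Qed.

Lemma INR_sq_dist (a b : nat) : a <> b -> 1 <= (INR a - INR b) ^ 2.
Proof.
  intros H. destruct (Nat.lt_total a b) as [Hl|[E|Hl]]; [|contradiction|];
    apply INR_lt_succ in Hl; nra.
Qed.

Lemma INR_close (a b : nat) : Rabs (INR a - INR b) < 1 -> a = b.
Proof.
  intros H. destruct (Nat.eq_dec a b) as [|Hne]; auto. exfalso.
  pose proof (INR_sq_dist a b Hne). apply Rabs_def2 in H as [H1 H2]. nra.
Qed.

Lemma INR_diff_not_half (a b : nat) : INR a - INR b <> 1 / 2.
Proof.
  intros H. destruct (Nat.le_gt_cases a b) as [Hl|Hl].
  - apply le_INR in Hl. lra.
  - apply INR_lt_succ in Hl. lra.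
Qed.

Lemma Rabs_le_between x a : Rabs x <= a <-> -a <= x <= a.
Proof. unfold Rabs. destruct (Rcase_abs x); split; intros; lra. Qed.

Section Example.
Variables (h w tau : nat).
Hypothesis Hh : (1 <= h)%nat.
Hypothesis Hw : (1 <= w)%nat.
Hypothesis Ht : (1 <= tau)%nat.

Local Notation n := (h + w)%nat.
Local Notation P := (period h w).
Local Notation N := (nmeet h w tau).
Local Notation mtime := (meet_time h w).

Definition ex_times (i : nat) : R := INR (i * P).
Definition ex_pts (i x : nat) : R * R :=
  if (x <? h)%nat then (INR x, 0)
  else (- INR ((x - h) * h) - 1 + (if Nat.even i then 0 else INR P), 0).
Definition ex_eps : R := 1 / 8.

Local Notation DC := (dconn tau ex_times ex_pts ex_eps).
Local Notation CN := (conn n tau ex_times ex_pts ex_eps).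
Local Notation IC := (IsComp n tau ex_times ex_pts ex_eps).

Lemma ex_times_succ i : ex_times (S i) = ex_times i + INR P.
Proof. unfold ex_times. rewrite <- plus_INR. f_equal. lia. Qed.

Lemma period_ge_1 : 1 <= INR P.
Proof. apply (le_INR 1). unfold period. lia. Qed.

Lemma ex_times_increasing : times_increasing tau ex_times.
Proof. intros i Hi. rewrite ex_times_succ. pose proof period_ge_1. lra. Qed.

Lemma ex_times_0 : ex_times 0 = 0.
Proof. reflexivity. Qed.

Lemma interp_post i x t : (x < h)%nat -> interp ex_times ex_pts i x t = (INR x, 0).
Proof.
  intros Hx. unfold interp, ex_pts.
  replace (x <? h)%nat with true by (symmetry; apply Nat.ltb_lt; auto). simpl. f_equal; ring.
Qed.

Lemma interp_runner i x t : (h <= x)%nat -> interp ex_times ex_pts i x t =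
  (- INR ((x - h) * h) - 1 +
     (if Nat.even i then t - ex_times i else INR P - (t - ex_times i)), 0).
Proof.
  intros Hx. unfold interp, ex_pts.
  replace (x <? h)%nat with false by (symmetry; apply Nat.ltb_ge; auto). cbn [fst snd].
  rewrite ex_times_succ, Nat.even_succ, <- Nat.negb_even. pose proof period_ge_1.
  destruct (Nat.even i); simpl; f_equal; field; lra.
Qed.

Lemma sqdist_post_runner i j k t : (j < h)%nat -> (k < w)%nat ->
  sqdist ex_times ex_pts i j (h + k) t = (t - INR (meet_time_at h w i j k)) ^ 2.
Proof.
  intros Hj Hk. unfold sqdist. rewrite interp_post by auto. rewrite interp_runner by lia.
  simpl. replace (h + k - h)%nat with k by lia.
  unfold meet_time_at, block_time, ex_times.
  pose proof (offset_range h w Hh Hw j k Hj Hk) as Ho.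
  destruct (Nat.even i).
  - rewrite plus_INR. unfold offset. rewrite !plus_INR, !mult_INR. simpl. ring.
  - rewrite plus_INR, minus_INR by lia. unfold offset. rewrite !plus_INR, !mult_INR. simpl. ring.
Qed.

Lemma sqdist_posts i a b t : (a < h)%nat -> (b < h)%nat ->
  sqdist ex_times ex_pts i a b t = (INR a - INR b) ^ 2.
Proof. intros. unfold sqdist. rewrite !interp_post by auto. simpl. ring. Qed.

Lemma sqdist_runners i a b t : (h <= a)%nat -> (h <= b)%nat ->
  sqdist ex_times ex_pts i a b t = (INR ((b - h) * h) - INR ((a - h) * h)) ^ 2.
Proof. intros. unfold sqdist. rewrite !interp_runner by auto. simpl. destruct (Nat.even i); ring. Qed.

Lemma meet_time_at_real i j k : (j < h)%nat -> (k < w)%nat ->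
  ex_times i + 1 <= INR (meet_time_at h w i j k) <= ex_times (S i) - 1.
Proof.
  intros Hj Hk. destruct (meet_time_at_range h w Hh Hw i j k Hj Hk) as [B1 B2].
  rewrite ex_times_succ. unfold ex_times. split.
  - rewrite <- S_INR. apply le_INR. lia.
  - assert (INR (meet_time_at h w i j k) + 1 <= INR (i * P) + INR P); [|lra].
    rewrite <- S_INR, <- plus_INR. apply le_INR. lia.
Qed.

Lemma meet_time_real m : (m < N)%nat -> 1 <= INR (mtime m) /\ INR (mtime m) + 1 <= ex_times tau.
Proof.
  intros Hm. destruct (meet_time_range h w tau Hh Hw m Hm) as [B1 B2]. unfold ex_times.
  split; [apply (le_INR 1); auto|]. rewrite <- S_INR. apply le_INR. lia.
Qed.

Definition live t m := (m < N)%nat /\ Rabs (t - INR (mtime m)) <= 1 / 4.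

Definition meet_pair m p q :=
  (p = meet_post h w m /\ q = (h + meet_runner w m)%nat) \/
  (q = meet_post h w m /\ p = (h + meet_runner w m)%nat).

(* Meetings are one time unit apart, so at most one is live at a time. *)
Lemma live_unique t m m' : live t m -> live t m' -> m = m'.
Proof.
  intros [Hm A] [Hm' A']. apply (meet_time_inj h w Hh Hw).
  apply INR_close. apply Rabs_le_between in A, A'. apply Rabs_def1; lra.
Qed.

Lemma dconn_live m t : live t m -> DC t (meet_post h w m) (h + meet_runner w m).
Proof.
  intros [Hm Ha]. pose proof (meet_edge_lt h w tau Hh Hw m Hm) as Hi.
  pose proof (meet_post_lt h w Hh Hw m) as Hj. pose proof (meet_runner_lt h w Hh Hw m) as Hk.
  pose proof (meet_time_at_real (meet_edge h w m) _ _ Hj Hk) as B. unfold meet_time in Ha.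
  apply Rabs_le_between in Ha.
  apply dconn_sqdist. exists (meet_edge h w m). split; auto. split.
  - unfold on_edge. lra.
  - rewrite sqdist_post_runner by auto. unfold ex_eps. nra.
Qed.

Lemma dconn_iff_live t p q : (p < n)%nat -> (q < n)%nat -> p <> q ->
  (DC t p q <-> exists m, live t m /\ meet_pair m p q).
Proof.
  intros Hp Hq Hpq. split.
  - intros D.
    assert (Key : forall a b, (a < h)%nat -> (h <= b < n)%nat -> DC t a b ->
       exists m, live t m /\ a = meet_post h w m /\ b = (h + meet_runner w m)%nat).
    { intros a b Ha Hb Dab. apply dconn_sqdist in Dab. destruct Dab as [i [Hi [Si HF]]].
      change (sqdist ex_times ex_pts i a b t <= (2 * ex_eps) ^ 2) in HF.
      replace b with (h + (b - h))%nat in HF by lia.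
      rewrite sqdist_post_runner in HF by lia. unfold ex_eps in HF.
      exists (meet_code h w i a (b - h)).
      destruct (meet_decode h w i a (b - h) Ha ltac:(lia)) as [_ [E1 E2]].
      split; [|split; [auto|lia]]. split; [apply meet_code_lt; auto; lia|].
      rewrite meet_time_code by lia. apply Rabs_le_between. nra. }
    destruct (Nat.lt_ge_cases p h) as [Hph|Hph]; destruct (Nat.lt_ge_cases q h) as [Hqh|Hqh].
    + exfalso. apply dconn_sqdist in D. destruct D as [i [_ [_ HF]]].
      change (sqdist ex_times ex_pts i p q t <= (2 * ex_eps) ^ 2) in HF.
      rewrite sqdist_posts in HF by auto.
      pose proof (INR_sq_dist p q Hpq). unfold ex_eps in HF. lra.
    + destruct (Key p q Hph ltac:(lia) D) as [m [A [E1 E2]]]. exists m. split; auto. left; auto.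
    + destruct (Key q p Hqh ltac:(lia) (dconn_sym _ _ _ _ _ _ _ D)) as [m [A [E1 E2]]].
      exists m. split; auto. right; auto.
    + exfalso. apply dconn_sqdist in D. destruct D as [i [_ [_ HF]]].
      change (sqdist ex_times ex_pts i p q t <= (2 * ex_eps) ^ 2) in HF.
      rewrite sqdist_runners in HF by auto.
      assert (Hne : ((q - h) * h <> (p - h) * h)%nat) by nia.
      pose proof (INR_sq_dist _ _ Hne). unfold ex_eps in HF. lra.
  - intros [m [A [[-> ->]|[-> ->]]]].
    + apply dconn_live; auto.
    + apply dconn_sym, dconn_live; auto.
Qed.

Lemma meet_pair_lt m p q : meet_pair m p q -> (p < n)%nat /\ (q < n)%nat.
Proof.
  pose proof (meet_post_lt h w Hh Hw m). pose proof (meet_runner_lt h w Hh Hw m). unfold meet_pair. lia.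
Qed.

Lemma meet_pair_ne m p q : meet_pair m p q -> p <> q.
Proof. pose proof (meet_post_lt h w Hh Hw m). unfold meet_pair. lia. Qed.

(* Since at most one meeting is live, a chain of direct connections is at
   most one step long. *)
Lemma conn_live t p q : CN t p q -> p = q \/ exists m, live t m /\ meet_pair m p q.
Proof.
  intros H. unfold conn in H. induction H as [a b [Ha [Hb D]]| a | a b c _ IH1 _ IH2].
  - destruct (Nat.eq_dec a b) as [|Hne]; [left; auto|right]. apply dconn_iff_live; auto.
  - left; auto.
  - destruct IH1 as [->|[m [A1 R1]]]; auto.
    destruct IH2 as [<-|[m' [A2 R2]]]; [right; exists m; auto|].
    rewrite <- (live_unique t m m' A1 A2) in R2.
    pose proof (meet_post_lt h w Hh Hw m). left. unfold meet_pair in *. lia.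
Qed.

Lemma conn_of_live t m p q : live t m -> meet_pair m p q -> CN t p q.
Proof.
  intros A R. destruct (meet_pair_lt m p q R). apply rt_step. split; auto. split; auto.
  apply dconn_iff_live; auto. eapply meet_pair_ne; eauto. exists m; auto.
Qed.

Definition pairset m y := y = meet_post h w m \/ y = (h + meet_runner w m)%nat.

Lemma comp_live t m : live t m -> IC t (pairset m).
Proof.
  intros A. exists (meet_post h w m).
  pose proof (meet_post_lt h w Hh Hw m). pose proof (meet_runner_lt h w Hh Hw m). split; [lia|].
  intros y. split.
  - intros [-> | ->]; split; try lia; [apply rt_refl|]. apply (conn_of_live t m); auto. left; auto.
  - intros [Hy C]. apply conn_live in C. destruct C as [<-|[m' [A' R]]]; [left; auto|].
    rewrite <- (live_unique t m m' A A') in R. unfold pairset, meet_pair in *. lia.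
Qed.

Lemma comp_alone t x : (x < n)%nat -> (forall m, live t m -> ~ involved h w m x) ->
  IC t (fun y => y = x).
Proof.
  intros Hx Hn. exists x. split; auto. intros y. split.
  - intros ->. split; auto. apply rt_refl.
  - intros [Hy C]. apply conn_live in C. destruct C as [<-|[m [A R]]]; auto.
    exfalso. apply (Hn m A). unfold involved, meet_pair in *. tauto.
Qed.

Lemma comp_cases t C : IC t C ->
  (exists x, (x < n)%nat /\ (forall m, live t m -> ~ involved h w m x) /\ sameset C (fun y => y = x)) \/
  (exists m, live t m /\ sameset C (pairset m)).
Proof.
  intros [x [Hx HC]]. pose proof (meet_post_lt h w Hh Hw) as Hj.
  destruct (classic (exists m, live t m /\ involved h w m x)) as [[m [A I]]|Nx].
  - right. exists m. split; auto. intros y. rewrite HC. split.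
    + intros [Hy Cn]. apply conn_live in Cn. destruct Cn as [<-|[m' [A' R]]].
      * unfold involved, pairset in *. tauto.
      * rewrite <- (live_unique t m m' A A') in R. unfold pairset, meet_pair, involved in *.
        specialize (Hj m). lia.
    + intros Py. assert (Hy : (y < n)%nat) by (apply (involved_lt h w Hh Hw m); auto).
      split; auto. destruct (Nat.eq_dec x y) as [<-|Hne]; [apply rt_refl|].
      apply (conn_of_live t m); auto. unfold meet_pair, pairset, involved in *.
      specialize (Hj m). lia.
  - left. exists x. split; auto. split.
    + intros m A I. apply Nx. exists m; auto.
    + intros y. rewrite HC. split.
      * intros [Hy Cn]. apply conn_live in Cn. destruct Cn as [<-|[m [A R]]]; auto.
        exfalso. apply Nx. exists m. split; auto. unfold involved, meet_pair in *. tauto.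
      * intros ->. split; auto. apply rt_refl.
Qed.

Lemma connection_at_meeting x y t : becomes_connected tau ex_times ex_pts ex_eps x y t ->
  (x < n)%nat -> (y < n)%nat -> x <> y ->
  exists m, (m < N)%nat /\ meet_pair m x y /\ t = INR (mtime m) - 1 / 4.
Proof.
  intros [Dm [D Hb]] Hx Hy Hxy. apply dconn_iff_live in D; auto. destruct D as [m [[Hm A] R]].
  exists m. split; auto. split; auto. apply Rabs_le_between in A.
  destruct (Req_dec t (INR (mtime m) - 1 / 4)) as [E|E]; auto. exfalso.
  destruct (Hb (t - (INR (mtime m) - 1 / 4)) ltac:(lra)) as [s [Ds [Hs Ns]]]. apply Ns.
  apply dconn_iff_live; auto. exists m. split; auto. split; auto. apply Rabs_le_between. lra.
Qed.

Lemma disconnection_at_meeting x y t : becomes_disconnected tau ex_times ex_pts ex_eps x y t ->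
  (x < n)%nat -> (y < n)%nat -> x <> y ->
  exists m, (m < N)%nat /\ meet_pair m x y /\ t = INR (mtime m) + 1 / 4.
Proof.
  intros [Dm [D Hb]] Hx Hy Hxy. apply dconn_iff_live in D; auto. destruct D as [m [[Hm A] R]].
  exists m. split; auto. split; auto. apply Rabs_le_between in A.
  destruct (Req_dec t (INR (mtime m) + 1 / 4)) as [E|E]; auto. exfalso.
  destruct (Hb ((INR (mtime m) + 1 / 4) - t) ltac:(lra)) as [s [Ds [Hs Ns]]]. apply Ns.
  apply dconn_iff_live; auto. exists m. split; auto. split; auto. apply Rabs_le_between. lra.
Qed.

Lemma event_at_meeting x y b t : event n tau ex_times ex_pts ex_eps x y b t ->
  exists m, (m < N)%nat /\ x = meet_post h w m /\ y = (h + meet_runner w m)%nat /\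
    t = INR (mtime m) + (if b then - (1 / 4) else 1 / 4).
Proof.
  intros [Hxy [Hy E]].
  assert (Order : forall m, meet_pair m x y -> x = meet_post h w m /\ y = (h + meet_runner w m)%nat)
    by (intros m R; pose proof (meet_post_lt h w Hh Hw m); unfold meet_pair in R; lia).
  destruct b.
  - destruct (connection_at_meeting x y t E ltac:(lia) Hy ltac:(lia)) as [m [Hm [R T]]].
    exists m. destruct (Order m R). repeat split; auto.
  - destruct (disconnection_at_meeting x y t E ltac:(lia) Hy ltac:(lia)) as [m [Hm [R T]]].
    exists m. destruct (Order m R). repeat split; auto.
Qed.

Lemma ex_general_position : general_position n tau ex_times ex_pts ex_eps.
Proof.
  split.
  - intros x y b t x' y' b' t' E E' Hne <-. apply Hne.
    destruct (event_at_meeting x y b t E) as [m [Hm [Ex [Ey Tm]]]].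
    destruct (event_at_meeting x' y' b' t E') as [m' [Hm' [Ex' [Ey' Tm']]]].
    assert (Hb : b = b').
    { destruct b, b'; auto; exfalso; rewrite Tm in Tm'.
      - apply (INR_diff_not_half (mtime m) (mtime m')). lra.
      - apply (INR_diff_not_half (mtime m') (mtime m)). lra. }
    subst b'. rewrite Tm in Tm'. assert (Et : INR (mtime m) = INR (mtime m')) by lra.
    apply INR_eq, (meet_time_inj h w Hh Hw) in Et. subst. reflexivity.
  - intros x y b t E. destruct (event_at_meeting x y b t E) as [m [Hm [_ [_ Tm]]]].
    destruct (meet_time_real m Hm). rewrite ex_times_0. destruct b; lra.
Qed.

Lemma not_live_half m m' : ~ live (INR (mtime m) + 1 / 2) m'.
Proof.
  intros [_ A]. apply Rabs_le_between in A.
  destruct (Nat.le_gt_cases (mtime m') (mtime m)) as [Hl|Hl].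
  - apply le_INR in Hl. lra.
  - apply INR_lt_succ in Hl. lra.
Qed.

(* Every Reeb graph of the example has an edge for each of the [N] pair
   components, and these edges are distinct: an edge carrying the pair of
   meeting [m] at time [mtime m] and at a later time [mtime m'] would keep
   the pair connected in between, when no meeting is live. *)
Lemma ex_edge_lower_bound G : IsReebGraph n tau ex_times ex_pts ex_eps G -> (N <= ne G)%nat.
Proof.
  intros HR.
  apply (le_of_injective_rel N (ne G) (fun m e => (e < ne G)%nat /\
     vtime G (src G e) <= INR (mtime m) <= vtime G (dst G e) /\ sameset (ecomp G e) (pairset m))).
  - intros m Hm. destruct HR as [_ [_ [Hcov _]]].
    destruct (meet_time_real m Hm) as [B1 B2].
    destruct (Hcov (INR (mtime m)) (pairset m)) as [e [He [Ti Si]]].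
    + split; [rewrite ex_times_0; lra|lra].
    + apply comp_live. split; auto. apply Rabs_le_between. lra.
    + exists e. auto.
  - intros m m' e Hm Hm' [He [T S]] [_ [T' S']].
    assert (Apart : forall a b, sameset (ecomp G e) (pairset a) -> vtime G (src G e) <= INR (mtime a) ->
      INR (mtime b) <= vtime G (dst G e) -> ~ (mtime a < mtime b)%nat).
    { intros a b Sa Ta Tb Hlt. apply INR_lt_succ in Hlt.
      destruct HR as [Hed _]. destruct (Hed e He) as [_ [_ [_ Hc]]].
      set (s := INR (mtime a) + 1 / 2).
      assert (Cn : CN s (meet_post h w a) (h + meet_runner w a)%nat).
      { apply (comp_conn n tau ex_times ex_pts ex_eps s (ecomp G e));
          [apply Hc; unfold s; lra|apply Sa; left; auto|apply Sa; right; auto]. }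
      apply conn_live in Cn. destruct Cn as [E|[m'' [A _]]].
      - pose proof (meet_post_lt h w Hh Hw a). lia.
      - exact (not_live_half a m'' A). }
    apply (meet_time_inj h w Hh Hw).
    destruct (Nat.lt_total (mtime m) (mtime m')) as [Hl|[Eq|Hl]]; auto; exfalso.
    + apply (Apart m m'); tauto.
    + apply (Apart m' m); tauto.
Qed.

(** Vertices: [x] and [n + x] are the start and end vertices of entity [x];
    [2n + 2m] and [2n + 2m + 1] are the merge and split vertices at the
    beginning and end of meeting [m] (times [mtime m -+ 1/4]).
    Edges: edge [m < N] carries the pair component of meeting [m]; the
    remaining edges carry singleton components, the [r]-th "solo" edge of
    entity [x] running from its start (or the end of its [(r-1)]-st
    meeting) to its [r]-th meeting (or its end). *)

Local Notation nm x := (nmeets h w tau x).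
Local Notation mt x r := (meeting h w x r).
Local Notation rk x m := (rank h w x m).

Lemma nmeets_pos x : (1 <= nm x)%nat.
Proof. unfold nmeets. destruct (x <? h); nia. Qed.

(* Posts and runners use even and odd edge numbers after each meeting. *)
Definition side x : nat := if (x <? h)%nat then 0%nat else 1%nat.

Definition solo_edge x r : nat :=
  match r with
  | O => (N + x)%nat
  | S r' => (N + n + 2 * mt x r' + side x)%nat
  end.

Definition solo_entity e : nat :=
  if (e <? N + n)%nat then (e - N)%nat
  else let d := (e - N - n)%nat in
       if Nat.odd d then (h + meet_runner w (Nat.div2 d))%nat else meet_post h w (Nat.div2 d).

Definition solo_index e : nat :=
  if (e <? N + n)%nat then 0%nat
  else S (rk (solo_entity e) (Nat.div2 (e - N - n))).

Definition ex_nv := (2 * n + 2 * N)%nat.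
Definition ex_ne := (N + n + 2 * N)%nat.

Definition solo_src x r : nat :=
  match r with
  | O => x
  | S r' => (2 * n + 2 * mt x r' + 1)%nat
  end.

Definition solo_dst x r : nat :=
  if (r =? nm x)%nat then (n + x)%nat else (2 * n + 2 * mt x r)%nat.

Definition ex_src e : nat := if (e <? N)%nat then (2 * n + 2 * e)%nat else solo_src (solo_entity e) (solo_index e).
Definition ex_dst e : nat := if (e <? N)%nat then (2 * n + 2 * e + 1)%nat else solo_dst (solo_entity e) (solo_index e).
Definition ex_comp e : nat -> Prop := if (e <? N)%nat then pairset e else (fun y => y = solo_entity e).

Definition ex_kind v : VKind :=
  if (v <? n)%nat then VStart else if (v <? 2 * n)%nat then VEnd
  else if Nat.even (v - 2 * n) then VMerge else VSplit.

Definition ex_vtime v : R :=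
  if (v <? n)%nat then ex_times 0 else if (v <? 2 * n)%nat then ex_times tau
  else if Nat.even (v - 2 * n) then INR (mtime (Nat.div2 (v - 2 * n))) - 1 / 4
  else INR (mtime (Nat.div2 (v - 2 * n))) + 1 / 4.

Definition ex_graph : ReebGraph := {| nv := ex_nv; ne := ex_ne; src := ex_src; dst := ex_dst;
  vtime := ex_vtime; vkind := ex_kind; ecomp := ex_comp |}.

Lemma solo_edge_decode x r : (x < n)%nat -> (r <= nm x)%nat ->
  (N <= solo_edge x r < ex_ne)%nat /\ solo_entity (solo_edge x r) = x /\ solo_index (solo_edge x r) = r.
Proof.
  intros Hx Hr. destruct r as [|r].
  - simpl. unfold solo_entity, solo_index, ex_ne.
    replace (N + x <? N + n)%nat with true by (symmetry; apply Nat.ltb_lt; lia).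
    repeat split; lia.
  - destruct (meeting_spec h w tau Hh Hw x r Hx ltac:(lia)) as [Hm Ip].
    change (solo_edge x (S r)) with (N + n + 2 * mt x r + side x)%nat. set (m := mt x r) in *.
    assert (Hs : (side x <= 1)%nat) by (unfold side; destruct (x <? h)%nat; lia).
    assert (Hdiv : Nat.div2 (2 * m + side x) = m).
    { unfold side; destruct (x <? h)%nat; [rewrite Nat.add_0_r; apply Nat.div2_double|apply Nat.div2_odd']. }
    replace (N + n + 2 * m + side x - N - n)%nat with (2 * m + side x)%nat by lia.
    assert (Big : (N + n + 2 * m + side x <? N + n)%nat = false) by (apply Nat.ltb_ge; lia).
    assert (HX : solo_entity (N + n + 2 * m + side x) = x).
    { unfold solo_entity. rewrite Big. cbv zeta.
      replace (N + n + 2 * m + side x - N - n)%nat with (2 * m + side x)%nat by lia.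
      rewrite Hdiv. unfold side, involved in *. pose proof (meet_post_lt h w Hh Hw m).
      destruct (x <? h)%nat eqn:E.
      - rewrite Nat.add_0_r, Nat.odd_even. apply Nat.ltb_lt in E. lia.
      - rewrite Nat.odd_odd. apply Nat.ltb_ge in E. lia. }
    split; [unfold ex_ne; lia|]. split; auto.
    unfold solo_index. rewrite Big, HX.
    replace (N + n + 2 * m + side x - N - n)%nat with (2 * m + side x)%nat by lia.
    rewrite Hdiv. unfold m. rewrite (rank_meeting h w Hh Hw x r Hx). reflexivity.
Qed.

Lemma solo_edge_encode e : (N <= e < ex_ne)%nat ->
  (solo_entity e < n)%nat /\ (solo_index e <= nm (solo_entity e))%nat /\
  solo_edge (solo_entity e) (solo_index e) = e.
Proof.
  intros He. unfold ex_ne in He. destruct (e <? N + n)%nat eqn:E.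
  - apply Nat.ltb_lt in E. unfold solo_entity, solo_index.
    rewrite (proj2 (Nat.ltb_lt _ _) E). simpl. lia.
  - pose proof E as Eb. apply Nat.ltb_ge in E. set (d := (e - N - n)%nat).
    pose proof (Nat.div2_odd d) as Hd. set (m := Nat.div2 d) in *.
    assert (Hb : (Nat.b2n (Nat.odd d) <= 1)%nat) by (destruct (Nat.odd d); simpl; lia).
    assert (Hm : (m < N)%nat) by lia.
    pose proof (meet_post_lt h w Hh Hw m). pose proof (meet_runner_lt h w Hh Hw m).
    assert (HX : solo_entity e = if Nat.odd d then (h + meet_runner w m)%nat else meet_post h w m)
      by (unfold solo_entity; rewrite Eb; auto).
    assert (Ip : involved h w m (solo_entity e))
      by (rewrite HX; unfold involved; destruct (Nat.odd d); auto).
    destruct (rank_spec h w tau Hh Hw m _ Hm Ip) as [Hr Hmm].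
    assert (HR : solo_index e = S (rk (solo_entity e) m)) by (unfold solo_index; rewrite Eb; auto).
    split; [rewrite HX; destruct (Nat.odd d); lia|]. split; [rewrite HR; lia|]. rewrite HR.
    change (solo_edge (solo_entity e) (S (rk (solo_entity e) m)))
      with (N + n + 2 * mt (solo_entity e) (rk (solo_entity e) m) + side (solo_entity e))%nat.
    rewrite Hmm. unfold side. rewrite HX.
    destruct (Nat.odd d) eqn:Od; simpl in Hd.
    + replace (h + meet_runner w m <? h)%nat with false by (symmetry; apply Nat.ltb_ge; lia). lia.
    + replace (meet_post h w m <? h)%nat with true by (symmetry; apply Nat.ltb_lt; lia). lia.
Qed.

Lemma solo_edge_inj x r x' r' : (x < n)%nat -> (r <= nm x)%nat -> (x' < n)%nat -> (r' <= nm x')%nat ->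
  solo_edge x r = solo_edge x' r' -> x = x' /\ r = r'.
Proof.
  intros Hx Hr Hx' Hr' E.
  destruct (solo_edge_decode x r Hx Hr) as [_ [E1 E2]].
  destruct (solo_edge_decode x' r' Hx' Hr') as [_ [E1' E2']].
  rewrite E in E1, E2. split; congruence.
Qed.

Lemma solo_edge_lt x r : (x < n)%nat -> (r <= nm x)%nat -> (solo_edge x r < ex_ne)%nat.
Proof. intros Hx Hr. apply (solo_edge_decode x r Hx Hr). Qed.

Lemma edge_cases e : (e < ex_ne)%nat ->
  (e < N)%nat \/ exists x r, (x < n)%nat /\ (r <= nm x)%nat /\ e = solo_edge x r.
Proof.
  intros He. destruct (Nat.lt_ge_cases e N) as [H|H]; [left; auto|right].
  destruct (solo_edge_encode e ltac:(lia)) as [A [B C]]. exists (solo_entity e), (solo_index e). auto.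
Qed.

Lemma solo_edge_fields x r : (x < n)%nat -> (r <= nm x)%nat ->
  ex_src (solo_edge x r) = solo_src x r /\ ex_dst (solo_edge x r) = solo_dst x r /\
  ex_comp (solo_edge x r) = (fun y => y = x).
Proof.
  intros Hx Hr. destruct (solo_edge_decode x r Hx Hr) as [B [E1 E2]].
  unfold ex_src, ex_dst, ex_comp.
  replace (solo_edge x r <? N)%nat with false by (symmetry; apply Nat.ltb_ge; lia).
  rewrite E1, E2. auto.
Qed.

Lemma pair_edge_fields m : (m < N)%nat ->
  ex_src m = (2 * n + 2 * m)%nat /\ ex_dst m = (2 * n + 2 * m + 1)%nat /\ ex_comp m = pairset m.
Proof.
  intros Hm. unfold ex_src, ex_dst, ex_comp.
  replace (m <? N)%nat with true by (symmetry; apply Nat.ltb_lt; auto). auto.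
Qed.

Lemma start_vertex x : (x < n)%nat -> ex_kind x = VStart /\ ex_vtime x = ex_times 0.
Proof.
  intros Hx. unfold ex_kind, ex_vtime.
  replace (x <? n)%nat with true by (symmetry; apply Nat.ltb_lt; auto). auto.
Qed.

Lemma end_vertex x : (x < n)%nat -> ex_kind (n + x) = VEnd /\ ex_vtime (n + x) = ex_times tau.
Proof.
  intros Hx. unfold ex_kind, ex_vtime.
  replace (n + x <? n)%nat with false by (symmetry; apply Nat.ltb_ge; lia).
  replace (n + x <? 2 * n)%nat with true by (symmetry; apply Nat.ltb_lt; lia). auto.
Qed.

Lemma merge_vertex m :
  ex_kind (2 * n + 2 * m) = VMerge /\ ex_vtime (2 * n + 2 * m) = INR (mtime m) - 1 / 4.
Proof.
  unfold ex_kind, ex_vtime.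
  replace (2 * n + 2 * m <? n)%nat with false by (symmetry; apply Nat.ltb_ge; lia).
  replace (2 * n + 2 * m <? 2 * n)%nat with false by (symmetry; apply Nat.ltb_ge; lia).
  replace (2 * n + 2 * m - 2 * n)%nat with (2 * m)%nat by lia.
  rewrite Nat.even_even, Nat.div2_double. auto.
Qed.

Lemma split_vertex m :
  ex_kind (2 * n + 2 * m + 1) = VSplit /\ ex_vtime (2 * n + 2 * m + 1) = INR (mtime m) + 1 / 4.
Proof.
  unfold ex_kind, ex_vtime.
  replace (2 * n + 2 * m + 1 <? n)%nat with false by (symmetry; apply Nat.ltb_ge; lia).
  replace (2 * n + 2 * m + 1 <? 2 * n)%nat with false by (symmetry; apply Nat.ltb_ge; lia).
  replace (2 * n + 2 * m + 1 - 2 * n)%nat with (2 * m + 1)%nat by lia.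
  rewrite Nat.even_odd, Nat.div2_odd'. auto.
Qed.

Lemma vertex_cases v : (v < ex_nv)%nat ->
  (v < n)%nat \/ (exists x, (x < n)%nat /\ v = (n + x)%nat) \/
  (exists m, (m < N)%nat /\ v = (2 * n + 2 * m)%nat) \/
  (exists m, (m < N)%nat /\ v = (2 * n + 2 * m + 1)%nat).
Proof.
  intros Hv. unfold ex_nv in Hv.
  destruct (Nat.lt_ge_cases v n) as [H|H]; [left; auto|right].
  destruct (Nat.lt_ge_cases v (2 * n)) as [H2|H2]; [left; exists (v - n)%nat; split; lia|right].
  pose proof (Nat.div2_odd (v - 2 * n)) as Hd. set (m := Nat.div2 (v - 2 * n)) in *.
  destruct (Nat.odd (v - 2 * n)); simpl in Hd; [right|left]; exists m; split; lia.
Qed.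

Definition solo_start x r : R :=
  match r with O => ex_times 0 | S r' => INR (mtime (mt x r')) + 1 / 4 end.
Definition solo_end x r : R :=
  if (r =? nm x)%nat then ex_times tau else INR (mtime (mt x r)) - 1 / 4.

Lemma meeting_lt x r : (x < n)%nat -> (r < nm x)%nat -> (mt x r < N)%nat.
Proof. intros. apply (meeting_spec h w tau Hh Hw); auto. Qed.

Lemma solo_src_spec x r : (x < n)%nat -> (r <= nm x)%nat ->
  (solo_src x r < ex_nv)%nat /\ ex_vtime (solo_src x r) = solo_start x r.
Proof.
  intros Hx Hr. unfold ex_nv. destruct r as [|r].
  - simpl. split; [lia|]. apply start_vertex; auto.
  - simpl solo_src. pose proof (meeting_lt x r Hx ltac:(lia)). split; [lia|]. apply split_vertex.
Qed.

Lemma solo_dst_spec x r : (x < n)%nat -> (r <= nm x)%nat ->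
  (solo_dst x r < ex_nv)%nat /\ ex_vtime (solo_dst x r) = solo_end x r.
Proof.
  intros Hx Hr. unfold ex_nv, solo_dst, solo_end. destruct (r =? nm x)%nat eqn:E.
  - split; [lia|]. apply end_vertex; auto.
  - apply Nat.eqb_neq in E. pose proof (meeting_lt x r Hx ltac:(lia)). split; [lia|]. apply merge_vertex.
Qed.

Lemma meeting_time_gap x r r' : (x < n)%nat -> (r < r')%nat ->
  INR (mtime (mt x r)) + 1 <= INR (mtime (mt x r')).
Proof. intros. apply INR_lt_succ, (meeting_mono h w Hh Hw); auto. Qed.

Lemma meeting_time_le x r r' : (x < n)%nat -> (r <= r')%nat ->
  INR (mtime (mt x r)) <= INR (mtime (mt x r')).
Proof. intros. apply le_INR, (meeting_mono_le h w Hh Hw); auto. Qed.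

Lemma solo_start_lt_end x r : (x < n)%nat -> (r <= nm x)%nat -> solo_start x r < solo_end x r.
Proof.
  intros Hx Hr. pose proof (nmeets_pos x). unfold solo_start, solo_end.
  destruct r as [|r].
  - rewrite ex_times_0. replace (0 =? nm x)%nat with false by (symmetry; apply Nat.eqb_neq; lia).
    destruct (meet_time_real (mt x 0) (meeting_lt x 0 Hx ltac:(lia))). lra.
  - destruct (S r =? nm x)%nat eqn:E.
    + destruct (meet_time_real (mt x r) (meeting_lt x r Hx ltac:(lia))). lra.
    + pose proof (meeting_time_gap x r (S r) Hx ltac:(lia)). lra.
Qed.

Lemma solo_alone x r t : (x < n)%nat -> (r <= nm x)%nat -> solo_start x r < t < solo_end x r ->
  forall m, live t m -> ~ involved h w m x.
Proof.
  intros Hx Hr Htt m [Hm A] Ip. apply Rabs_le_between in A.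
  destruct (rank_spec h w tau Hh Hw m x Hm Ip) as [Hr' Hmm].
  set (r' := rk x m) in *.
  destruct (Nat.lt_ge_cases r' r) as [Hl|Hl].
  - destruct r as [|r0]; [lia|]. simpl in Htt.
    pose proof (meeting_time_le x r' r0 Hx ltac:(lia)) as Hle. rewrite Hmm in Hle. lra.
  - unfold solo_end in Htt. replace (r =? nm x)%nat with false in Htt by (symmetry; apply Nat.eqb_neq; lia).
    pose proof (meeting_time_le x r r' Hx Hl) as Hle. rewrite Hmm in Hle. lra.
Qed.

Lemma ex_edges_ok e : (e < ex_ne)%nat ->
  (ex_src e < ex_nv)%nat /\ (ex_dst e < ex_nv)%nat /\
  ex_vtime (ex_src e) < ex_vtime (ex_dst e) /\
  forall t, ex_vtime (ex_src e) < t < ex_vtime (ex_dst e) -> IC t (ex_comp e).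
Proof.
  intros He. destruct (edge_cases e He) as [Hp|[x [r [Hx [Hr ->]]]]].
  - destruct (pair_edge_fields e Hp) as [-> [-> ->]]. unfold ex_nv.
    rewrite (proj2 (merge_vertex e)), (proj2 (split_vertex e)).
    split; [lia|]. split; [lia|]. split; [lra|].
    intros t Htt. apply comp_live. split; auto. apply Rabs_le_between. lra.
  - destruct (solo_edge_fields x r Hx Hr) as [-> [-> ->]].
    destruct (solo_src_spec x r Hx Hr) as [S1 ->]. destruct (solo_dst_spec x r Hx Hr) as [S2 ->].
    split; auto. split; auto. split; [apply solo_start_lt_end; auto|].
    intros t Htt. apply comp_alone; auto. eapply solo_alone; eauto.
Qed.

Local Notation jm m := (meet_post h w m).
Local Notation km m := (h + meet_runner w m)%nat.

Lemma rank_ok m x : (m < N)%nat -> involved h w m x ->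
  (x < n)%nat /\ (rk x m < nm x)%nat /\ mt x (rk x m) = m.
Proof.
  intros Hm Ip. pose proof (involved_lt h w Hh Hw m x Ip).
  destruct (rank_spec h w tau Hh Hw m x Hm Ip). auto.
Qed.

Lemma src_start e x : (e < ex_ne)%nat -> (x < n)%nat -> (ex_src e = x <-> e = solo_edge x 0).
Proof.
  intros He Hx. split.
  - intros E. destruct (edge_cases e He) as [Hp|[x' [r' [Hx' [Hr' ->]]]]].
    + destruct (pair_edge_fields e Hp) as [Es _]. lia.
    + rewrite (proj1 (solo_edge_fields x' r' Hx' Hr')) in E. destruct r' as [|r']; simpl in E; [subst; auto|lia].
  - intros ->. rewrite (proj1 (solo_edge_fields x 0 Hx ltac:(lia))). auto.
Qed.

Lemma src_not_end e x : (e < ex_ne)%nat -> (x < n)%nat -> ex_src e <> (n + x)%nat.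
Proof.
  intros He Hx E. destruct (edge_cases e He) as [Hp|[x' [r' [Hx' [Hr' ->]]]]].
  - destruct (pair_edge_fields e Hp) as [Es _]. lia.
  - rewrite (proj1 (solo_edge_fields x' r' Hx' Hr')) in E. destruct r' as [|r']; simpl in E; lia.
Qed.

Lemma src_merge e m : (e < ex_ne)%nat -> (m < N)%nat -> (ex_src e = (2 * n + 2 * m)%nat <-> e = m).
Proof.
  intros He Hm. split.
  - intros E. destruct (edge_cases e He) as [Hp|[x' [r' [Hx' [Hr' ->]]]]].
    + destruct (pair_edge_fields e Hp) as [Es _]. lia.
    + rewrite (proj1 (solo_edge_fields x' r' Hx' Hr')) in E. destruct r' as [|r']; simpl in E; lia.
  - intros ->. apply pair_edge_fields; auto.
Qed.

Lemma src_split e m : (e < ex_ne)%nat -> (m < N)%nat ->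
  (ex_src e = (2 * n + 2 * m + 1)%nat <->
   In e [solo_edge (jm m) (S (rk (jm m) m)); solo_edge (km m) (S (rk (km m) m))]).
Proof.
  intros He Hm. split.
  - intros E. destruct (edge_cases e He) as [Hp|[x' [r' [Hx' [Hr' ->]]]]].
    + destruct (pair_edge_fields e Hp) as [Es _]. lia.
    + rewrite (proj1 (solo_edge_fields x' r' Hx' Hr')) in E. destruct r' as [|r']; simpl in E; [lia|].
      assert (Em : mt x' r' = m) by lia.
      destruct (meeting_spec h w tau Hh Hw x' r' Hx' ltac:(lia)) as [_ Ip]. rewrite Em in Ip.
      pose proof (rank_meeting h w Hh Hw x' r' Hx') as Er. rewrite Em in Er.
      simpl. destruct Ip as [->| ->]; [left|right; left]; rewrite Er; auto.
  - assert (K : forall x, involved h w m x -> ex_src (solo_edge x (S (rk x m))) = (2 * n + 2 * m + 1)%nat).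
    { intros x Ip. destruct (rank_ok m x Hm Ip) as [Hx [Hr Hmm]].
      rewrite (proj1 (solo_edge_fields x (S (rk x m)) Hx ltac:(lia))). simpl. rewrite Hmm. lia. }
    intros [<-|[<-|[]]]; apply K; unfold involved; auto.
Qed.

Lemma dst_not_start e x : (e < ex_ne)%nat -> (x < n)%nat -> ex_dst e <> x.
Proof.
  intros He Hx E. destruct (edge_cases e He) as [Hp|[x' [r' [Hx' [Hr' ->]]]]].
  - destruct (pair_edge_fields e Hp) as [_ [Ed _]]. lia.
  - rewrite (proj1 (proj2 (solo_edge_fields x' r' Hx' Hr'))) in E.
    unfold solo_dst in E. destruct (r' =? nm x')%nat; lia.
Qed.

Lemma dst_end e x : (e < ex_ne)%nat -> (x < n)%nat -> (ex_dst e = (n + x)%nat <-> e = solo_edge x (nm x)).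
Proof.
  intros He Hx. split.
  - intros E. destruct (edge_cases e He) as [Hp|[x' [r' [Hx' [Hr' ->]]]]].
    + destruct (pair_edge_fields e Hp) as [_ [Ed _]]. lia.
    + rewrite (proj1 (proj2 (solo_edge_fields x' r' Hx' Hr'))) in E. unfold solo_dst in E.
      destruct (r' =? nm x')%nat eqn:Er; [|lia].
      apply Nat.eqb_eq in Er. assert (x' = x) by lia. subst. auto.
  - intros ->. rewrite (proj1 (proj2 (solo_edge_fields x (nm x) Hx ltac:(lia)))).
    unfold solo_dst. rewrite Nat.eqb_refl. auto.
Qed.

Lemma dst_merge e m : (e < ex_ne)%nat -> (m < N)%nat ->
  (ex_dst e = (2 * n + 2 * m)%nat <->
   In e [solo_edge (jm m) (rk (jm m) m); solo_edge (km m) (rk (km m) m)]).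
Proof.
  intros He Hm. split.
  - intros E. destruct (edge_cases e He) as [Hp|[x' [r' [Hx' [Hr' ->]]]]].
    + destruct (pair_edge_fields e Hp) as [_ [Ed _]]. lia.
    + rewrite (proj1 (proj2 (solo_edge_fields x' r' Hx' Hr'))) in E. unfold solo_dst in E.
      destruct (r' =? nm x')%nat eqn:Erx; [lia|]. apply Nat.eqb_neq in Erx.
      assert (Em : mt x' r' = m) by lia.
      destruct (meeting_spec h w tau Hh Hw x' r' Hx' ltac:(lia)) as [_ Ip]. rewrite Em in Ip.
      pose proof (rank_meeting h w Hh Hw x' r' Hx') as Er. rewrite Em in Er.
      simpl. destruct Ip as [->| ->]; [left|right; left]; rewrite Er; auto.
  - assert (K : forall x, involved h w m x -> ex_dst (solo_edge x (rk x m)) = (2 * n + 2 * m)%nat).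
    { intros x Ip. destruct (rank_ok m x Hm Ip) as [Hx [Hr Hmm]].
      rewrite (proj1 (proj2 (solo_edge_fields x (rk x m) Hx ltac:(lia)))). unfold solo_dst.
      replace (rk x m =? nm x)%nat with false by (symmetry; apply Nat.eqb_neq; lia). rewrite Hmm. auto. }
    intros [<-|[<-|[]]]; apply K; unfold involved; auto.
Qed.

Lemma dst_split e m : (e < ex_ne)%nat -> (m < N)%nat -> (ex_dst e = (2 * n + 2 * m + 1)%nat <-> e = m).
Proof.
  intros He Hm. split.
  - intros E. destruct (edge_cases e He) as [Hp|[x' [r' [Hx' [Hr' ->]]]]].
    + destruct (pair_edge_fields e Hp) as [_ [Ed _]]. lia.
    + rewrite (proj1 (proj2 (solo_edge_fields x' r' Hx' Hr'))) in E.
      unfold solo_dst in E. destruct (r' =? nm x')%nat; lia.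
  - intros ->. apply pair_edge_fields; auto.
Qed.

Lemma indeg_list v L : NoDup L -> (forall e, In e L -> (e < ex_ne)%nat) ->
  (forall e, (e < ex_ne)%nat -> (ex_dst e = v <-> In e L)) -> indeg ex_graph v = length L.
Proof.
  intros ND HL Hc. unfold indeg. cbn. apply filter_length_exact; auto.
  intros e He. rewrite Nat.eqb_eq. apply Hc; auto.
Qed.

Lemma outdeg_list v L : NoDup L -> (forall e, In e L -> (e < ex_ne)%nat) ->
  (forall e, (e < ex_ne)%nat -> (ex_src e = v <-> In e L)) -> outdeg ex_graph v = length L.
Proof.
  intros ND HL Hc. unfold outdeg. cbn. apply filter_length_exact; auto.
  intros e He. rewrite Nat.eqb_eq. apply Hc; auto.
Qed.

Lemma NoDup_pair (a b : nat) : a <> b -> NoDup [a; b].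
Proof. intros. constructor; [simpl; intuition|]. constructor; [simpl; auto|constructor]. Qed.

Lemma start_vertex_ok x : (x < n)%nat ->
  indeg ex_graph x = 0%nat /\ outdeg ex_graph x = 1%nat /\ ex_vtime x = ex_times 0 /\
  forall e, (e < ex_ne)%nat -> ex_src e = x -> IC (ex_times 0) (ex_comp e).
Proof.
  intros Hx. split; [|split; [|split]].
  - apply (indeg_list x []); [constructor|simpl; tauto|]. intros e He. split; [|simpl; tauto].
    intro E. exfalso. eapply dst_not_start; eauto.
  - apply (outdeg_list x [solo_edge x 0]); [constructor; [simpl; auto|constructor]| |].
    + intros e [<-|[]]. apply solo_edge_lt; auto; lia.
    + intros e He. rewrite (src_start e x He Hx). simpl. intuition.
  - apply start_vertex; auto.
  - intros e He E. apply (src_start e x He Hx) in E. subst e.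
    rewrite (proj2 (proj2 (solo_edge_fields x 0 Hx ltac:(lia)))).
    apply comp_alone; auto. intros m [Hm A]. apply Rabs_le_between in A.
    destruct (meet_time_real m Hm). rewrite ex_times_0 in A. lra.
Qed.

Lemma end_vertex_ok x : (x < n)%nat ->
  indeg ex_graph (n + x) = 1%nat /\ outdeg ex_graph (n + x) = 0%nat /\
  ex_vtime (n + x) = ex_times tau /\
  forall e, (e < ex_ne)%nat -> ex_dst e = (n + x)%nat -> IC (ex_times tau) (ex_comp e).
Proof.
  intros Hx. split; [|split; [|split]].
  - apply (indeg_list (n + x) [solo_edge x (nm x)]); [constructor; [simpl; auto|constructor]| |].
    + intros e [<-|[]]. apply solo_edge_lt; auto.
    + intros e He. rewrite (dst_end e x He Hx). simpl. intuition.
  - apply (outdeg_list (n + x) []); [constructor|simpl; tauto|]. intros e He. split; [|simpl; tauto].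
    intro E. exfalso. eapply src_not_end; eauto.
  - apply end_vertex; auto.
  - intros e He E. apply (dst_end e x He Hx) in E. subst e.
    rewrite (proj2 (proj2 (solo_edge_fields x (nm x) Hx ltac:(lia)))).
    apply comp_alone; auto. intros m [Hm A]. apply Rabs_le_between in A.
    destruct (meet_time_real m Hm). lra.
Qed.

Lemma meeting_solo_edges m : (m < N)%nat ->
  let ej := solo_edge (jm m) (rk (jm m) m) in let ek := solo_edge (km m) (rk (km m) m) in
  let ej' := solo_edge (jm m) (S (rk (jm m) m)) in let ek' := solo_edge (km m) (S (rk (km m) m)) in
  ej <> ek /\ ej' <> ek' /\ (ej < ex_ne)%nat /\ (ek < ex_ne)%nat /\ (ej' < ex_ne)%nat /\ (ek' < ex_ne)%nat /\
  ex_comp ej = (fun y => y = jm m) /\ ex_comp ek = (fun y => y = km m) /\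
  ex_comp ej' = (fun y => y = jm m) /\ ex_comp ek' = (fun y => y = km m).
Proof.
  intros Hm. cbv zeta.
  assert (Ij : involved h w m (jm m)) by (unfold involved; auto).
  assert (Ik : involved h w m (km m)) by (unfold involved; auto).
  destruct (rank_ok m _ Hm Ij) as [Hxj [Hrj _]]. destruct (rank_ok m _ Hm Ik) as [Hxk [Hrk _]].
  pose proof (involved_distinct h w Hh Hw m) as Hjk.
  split; [intro E; apply solo_edge_inj in E; lia|].
  split; [intro E; apply solo_edge_inj in E; lia|].
  repeat split; try (apply solo_edge_lt; lia); apply solo_edge_fields; lia.
Qed.

Lemma merge_vertex_ok m : (m < N)%nat ->
  let v := (2 * n + 2 * m)%nat in
  indeg ex_graph v = 2%nat /\ outdeg ex_graph v = 1%nat /\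
  forall e1 e2 e3, (e1 < ex_ne)%nat -> (e2 < ex_ne)%nat -> (e3 < ex_ne)%nat ->
    e1 <> e2 -> ex_dst e1 = v -> ex_dst e2 = v -> ex_src e3 = v ->
    (forall y, ~ (ex_comp e1 y /\ ex_comp e2 y)) /\
    sameset (ex_comp e3) (fun y => ex_comp e1 y \/ ex_comp e2 y).
Proof.
  intros Hm v. subst v. destruct (meeting_solo_edges m Hm) as [Hne [_ [L1 [L2 [_ [_ [C1 [C2 _]]]]]]]].
  pose proof (involved_distinct h w Hh Hw m) as Hjk.
  split; [|split].
  - apply (indeg_list _ _ (NoDup_pair _ _ Hne)); [|intros; apply dst_merge; auto].
    intros e [<-|[<-|[]]]; auto.
  - apply (outdeg_list _ [m]); [constructor; [simpl; auto|constructor]| |].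
    + intros e [<-|[]]. unfold ex_ne. lia.
    + intros e He. rewrite (src_merge e m He Hm). simpl. intuition.
  - intros e1 e2 e3 H1 H2 H3 Hne12 D1 D2 S3.
    apply (dst_merge e1 m H1 Hm) in D1. apply (dst_merge e2 m H2 Hm) in D2.
    apply (src_merge e3 m H3 Hm) in S3. subst e3.
    rewrite (proj2 (proj2 (pair_edge_fields m Hm))).
    destruct D1 as [<-|[<-|[]]]; destruct D2 as [<-|[<-|[]]]; try congruence;
      rewrite C1, C2; unfold pairset; split; intros; try intros [? ?]; try lia; split; intros; lia.
Qed.

Lemma split_vertex_ok m : (m < N)%nat ->
  let v := (2 * n + 2 * m + 1)%nat in
  indeg ex_graph v = 1%nat /\ outdeg ex_graph v = 2%nat /\
  forall e1 e2 e3, (e1 < ex_ne)%nat -> (e2 < ex_ne)%nat -> (e3 < ex_ne)%nat ->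
    e1 <> e2 -> ex_src e1 = v -> ex_src e2 = v -> ex_dst e3 = v ->
    (forall y, ~ (ex_comp e1 y /\ ex_comp e2 y)) /\
    sameset (ex_comp e3) (fun y => ex_comp e1 y \/ ex_comp e2 y).
Proof.
  intros Hm v. subst v. destruct (meeting_solo_edges m Hm) as [_ [Hne [_ [_ [L1 [L2 [_ [_ [C1 C2]]]]]]]]].
  pose proof (involved_distinct h w Hh Hw m) as Hjk.
  split; [|split].
  - apply (indeg_list _ [m]); [constructor; [simpl; auto|constructor]| |].
    + intros e [<-|[]]. unfold ex_ne. lia.
    + intros e He. rewrite (dst_split e m He Hm). simpl. intuition.
  - apply (outdeg_list _ _ (NoDup_pair _ _ Hne)); [|intros; apply src_split; auto].
    intros e [<-|[<-|[]]]; auto.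
  - intros e1 e2 e3 H1 H2 H3 Hne12 D1 D2 S3.
    apply (src_split e1 m H1 Hm) in D1. apply (src_split e2 m H2 Hm) in D2.
    apply (dst_split e3 m H3 Hm) in S3. subst e3.
    rewrite (proj2 (proj2 (pair_edge_fields m Hm))).
    destruct D1 as [<-|[<-|[]]]; destruct D2 as [<-|[<-|[]]]; try congruence;
      rewrite C1, C2; unfold pairset; split; intros; try intros [? ?]; try lia; split; intros; lia.
Qed.

Lemma solo_edge_at x t : (x < n)%nat -> ex_times 0 <= t <= ex_times tau ->
  (forall m, live t m -> ~ involved h w m x) ->
  exists r, (r <= nm x)%nat /\ solo_start x r <= t <= solo_end x r.
Proof.
  intros Hx [Ht0 HtT] Hn.
  assert (Scan : forall d k, (k + d = nm x)%nat -> solo_start x k <= t ->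
            exists r, (r <= nm x)%nat /\ solo_start x r <= t <= solo_end x r).
  { induction d as [|d IH]; intros k Hk Hts.
    - exists k. split; [lia|]. split; auto. unfold solo_end.
      rewrite Nat.add_0_r in Hk. subst. rewrite Nat.eqb_refl. auto.
    - destruct (Rle_dec t (solo_end x k)) as [Hl|Hl]; [exists k; split; [lia|auto]|].
      apply IH with (k := S k); [lia|]. unfold solo_end in Hl.
      replace (k =? nm x)%nat with false in Hl by (symmetry; apply Nat.eqb_neq; lia).
      destruct (meeting_spec h w tau Hh Hw x k Hx ltac:(lia)) as [Hm Ip].
      simpl. apply Rnot_le_lt in Hl.
      destruct (Rle_dec t (INR (mtime (mt x k)) + 1 / 4)) as [H2|H2]; [|lra].
      exfalso. apply (Hn (mt x k)); auto. split; auto. apply Rabs_le_between. lra. }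
  apply (Scan (nm x) 0%nat); auto.
Qed.

Lemma ex_coverage t C : in_domain tau ex_times t -> IC t C ->
  exists e, (e < ex_ne)%nat /\ ex_vtime (ex_src e) <= t <= ex_vtime (ex_dst e) /\
    sameset (ex_comp e) C.
Proof.
  intros Hd HC. destruct (comp_cases t C HC) as [[x [Hx [Hn Sx]]]|[m [A Sm]]].
  - destruct (solo_edge_at x t Hx Hd Hn) as [r [Hr Ht']].
    exists (solo_edge x r). split; [apply solo_edge_lt; auto|].
    destruct (solo_edge_fields x r Hx Hr) as [-> [-> ->]].
    rewrite (proj2 (solo_src_spec x r Hx Hr)), (proj2 (solo_dst_spec x r Hx Hr)).
    split; auto. intros y. rewrite (Sx y). tauto.
  - destruct A as [Hm A]. exists m. split; [unfold ex_ne; lia|].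
    destruct (pair_edge_fields m Hm) as [-> [-> ->]].
    rewrite (proj2 (merge_vertex m)), (proj2 (split_vertex m)). apply Rabs_le_between in A.
    split; [lra|]. intros y. rewrite (Sm y). tauto.
Qed.

Lemma solo_edges_disjoint x r r' : (x < n)%nat -> (r < r')%nat -> (r' <= nm x)%nat ->
  solo_end x r <= solo_start x r'.
Proof.
  intros Hx Hl Hr'. unfold solo_end.
  replace (r =? nm x)%nat with false by (symmetry; apply Nat.eqb_neq; lia).
  destruct r' as [|r']; [lia|]. simpl. pose proof (meeting_time_le x r r' Hx ltac:(lia)). lra.
Qed.

Lemma ex_edges_distinct e e' t : (e < ex_ne)%nat -> (e' < ex_ne)%nat -> e <> e' ->
  ex_vtime (ex_src e) < t < ex_vtime (ex_dst e) ->
  ex_vtime (ex_src e') < t < ex_vtime (ex_dst e') ->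
  ~ sameset (ex_comp e) (ex_comp e').
Proof.
  intros He He' Hne T1 T2 Sm.
  assert (PairSolo : forall m x, (m < N)%nat -> ~ sameset (pairset m) (fun y => y = x)).
  { intros m x Hm S. pose proof (involved_distinct h w Hh Hw m).
    assert (jm m = x) by (apply S; left; auto). assert (km m = x) by (apply S; right; auto). lia. }
  destruct (edge_cases e He) as [Hp|[x [r [Hx [Hr ->]]]]];
  destruct (edge_cases e' He') as [Hp'|[x' [r' [Hx' [Hr' ->]]]]].
  - destruct (pair_edge_fields e Hp) as [E1 [E2 _]]. destruct (pair_edge_fields e' Hp') as [E1' [E2' _]].
    rewrite E1, E2, (proj2 (merge_vertex e)), (proj2 (split_vertex e)) in T1.
    rewrite E1', E2', (proj2 (merge_vertex e')), (proj2 (split_vertex e')) in T2.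
    apply Hne, (live_unique t); split; auto; apply Rabs_le_between; lra.
  - rewrite (proj2 (proj2 (pair_edge_fields e Hp))), (proj2 (proj2 (solo_edge_fields x' r' Hx' Hr'))) in Sm.
    exact (PairSolo e x' Hp Sm).
  - rewrite (proj2 (proj2 (pair_edge_fields e' Hp'))), (proj2 (proj2 (solo_edge_fields x r Hx Hr))) in Sm.
    apply (PairSolo e' x Hp'). intros y. symmetry. apply Sm.
  - rewrite (proj2 (proj2 (solo_edge_fields x r Hx Hr))), (proj2 (proj2 (solo_edge_fields x' r' Hx' Hr'))) in Sm.
    assert (x = x') by (apply Sm; auto). subst x'.
    destruct (solo_edge_fields x r Hx Hr) as [Es [Ed _]]. destruct (solo_edge_fields x r' Hx Hr') as [Es' [Ed' _]].
    rewrite Es, Ed, (proj2 (solo_src_spec x r Hx Hr)), (proj2 (solo_dst_spec x r Hx Hr)) in T1.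
    rewrite Es', Ed', (proj2 (solo_src_spec x r' Hx Hr')), (proj2 (solo_dst_spec x r' Hx Hr')) in T2.
    destruct (Nat.lt_total r r') as [Hl|[<-|Hl]].
    + pose proof (solo_edges_disjoint x r r' Hx Hl Hr'). lra.
    + apply Hne; auto.
    + pose proof (solo_edges_disjoint x r' r Hx Hl Hr). lra.
Qed.

Theorem ex_graph_is_reeb : IsReebGraph n tau ex_times ex_pts ex_eps ex_graph.
Proof.
  split; [|split; [|split]].
  - exact ex_edges_ok.
  - intros v Hv. cbn in Hv |- *.
    destruct (vertex_cases v Hv) as [Hs|[[x [Hx ->]]|[[m [Hm ->]]|[m [Hm ->]]]]].
    + rewrite (proj1 (start_vertex v Hs)). apply start_vertex_ok; auto.
    + rewrite (proj1 (end_vertex x Hx)). apply end_vertex_ok; auto.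
    + rewrite (proj1 (merge_vertex m)). apply merge_vertex_ok; auto.
    + rewrite (proj1 (split_vertex m)). apply split_vertex_ok; auto.
  - exact ex_coverage.
  - exact ex_edges_distinct.
Qed.

End Example.

(* Splitting [n >= 2] entities into posts and runners as evenly as possible
   gives [h w >= n^2 / 8] meetings per trajectory edge. *)
Lemma balanced_split n : (2 <= n)%nat ->
  exists h w, (1 <= h)%nat /\ (1 <= w)%nat /\ n = (h + w)%nat /\ (n * n <= 8 * h * w)%nat.
Proof.
  intros Hn. pose proof (Nat.div2_odd n) as Hd.
  exists (Nat.div2 n), (n - Nat.div2 n)%nat.
  assert (Hb : (Nat.b2n (Nat.odd n) <= 1)%nat) by (destruct (Nat.odd n); simpl; lia).
  set (b := Nat.b2n (Nat.odd n)) in *. set (k := Nat.div2 n) in *.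
  assert (1 <= k)%nat by lia. replace (n - k)%nat with (k + b)%nat by lia.
  repeat split; try lia. rewrite Hd. nia.
Qed.

Theorem theorem2 :
  (* upper bound: O(tau n^2) vertices and edges *)
  (exists C : nat,
     forall (n tau : nat) (ts : nat -> R) (pts : nat -> nat -> R * R) (eps : R),
       (1 <= tau)%nat -> 0 <= eps ->
       times_increasing tau ts ->
       general_position n tau ts pts eps ->
       forall G : ReebGraph,
         IsReebGraph n tau ts pts eps G ->
         (nv G <= C * tau * n * n)%nat /\ (ne G <= C * tau * n * n)%nat) /\
  (* tightness: Omega(tau n^2) in the worst case *)
  (exists (K n0 : nat), (1 <= K)%nat /\
     forall n tau : nat, (n0 <= n)%nat -> (1 <= tau)%nat ->
       exists (ts : nat -> R) (pts : nat -> nat -> R * R) (eps : R),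
         0 <= eps /\ times_increasing tau ts /\
         general_position n tau ts pts eps /\
         (exists G : ReebGraph, IsReebGraph n tau ts pts eps G) /\
         forall G : ReebGraph, IsReebGraph n tau ts pts eps G ->
           (tau * n * n <= K * nv G)%nat /\ (tau * n * n <= K * ne G)%nat).
Proof.
  split.
  - exists 8%nat. intros n tau ts pts eps Htau _ Hinc _ G HR.
    exact (reeb_upper_bound n tau ts pts eps G Hinc Htau HR).
  - exists 16%nat, 2%nat. split; [lia|]. intros n tau Hn Htau.
    destruct (balanced_split n Hn) as [h [w [Hh [Hw [-> Hsq]]]]].
    exists (ex_times h w), (ex_pts h w), ex_eps.
    split; [unfold ex_eps; lra|].
    split; [apply ex_times_increasing; auto|].
    split; [apply ex_general_position; auto|].
    split; [exists (ex_graph h w tau); apply ex_graph_is_reeb; auto|].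
    intros G HR.
    pose proof (ex_edge_lower_bound h w tau Hh Hw Htau G HR) as Hne.
    pose proof (edge_count _ _ _ _ _ G Htau HR) as Hnv. unfold nmeet in Hne.
    split; nia.
Qed.
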